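(* Let $\rho>0$ and let $v$ be a bounded, $1$-periodic (i.e. $v(z+1)=v(z)$), non-constant analytic function on the strip $\{z\in\mathbb{C}:|\operatorname{Im} z|<\rho\}$. Then for every $0<\delta<\rho$ and every $k\in\mathbb{N}$ there exists $\epsilon>0$, depending only on $\delta$, $k$ and $v$, such that for every $k$-tuple $(E_1,\dots,E_k)\in\mathbb{R}^k$, $$\sup_{\delta/2\le y\le\delta}\ \min_{1\le j\le k}\ \inf_{x\in[0,1]}\big|v(x+iy)-E_j\big|>\epsilon .$$ *)

From Stdlib Require Import Reals.
From Coquelicot Require Import Coquelicot.
Open Scope R_scope.

Definition strip (rho : R) (z : C) : Prop := Rabs (Im z) < rho.

Definition analytic_on_strip (rho : R) (v : C -> C) : Prop :=
  forall z : C, strip rho z -> @ex_derive C_AbsRing C_NormedModule v z.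

Definition bounded_on_strip (rho : R) (v : C -> C) : Prop :=
  exists M : R, forall z : C, strip rho z -> Cmod (v z) <= M.

(* 1-periodic: v(z+1) = v(z) on the strip (the strip is invariant under z+1). *)
Definition one_periodic_on_strip (rho : R) (v : C -> C) : Prop :=
  forall z : C, strip rho z -> v (Cplus z (RtoC 1)) = v z.

Definition nonconstant_on_strip (rho : R) (v : C -> C) : Prop :=
  exists z1 z2 : C, strip rho z1 /\ strip rho z2 /\ v z1 <> v z2.

From Stdlib Require Import Reals.
From Coquelicot Require Import Coquelicot.
From Stdlib Require Import Lra Lia Classical ClassicalEpsilon FunctionalExtensionality.
Open Scope R_scope.

(* The level sets of the nonconstant analytic function [v] are discrete in the strip (the
   identity theorem, obtained from Goursat's lemma, a Cauchy formula on squares, the resulting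
   power series expansion, and real induction along segments).  Hence for every level [c] and
   every interval of heights, some horizontal segment [[0,1] + i y] misses [c], and by compactness
   of [[0,1]] a whole band of heights around [y] stays at a positive distance from [c].
   Compactness in [c], large levels being excluded by boundedness, makes the band length and the
   distance uniform in [c].  An induction on [k] concludes: the level [E_k] leaves a band of
   uniform length free, inside which the other levels are avoided uniformly in the band's position. *)

Lemma Cmod_Im_le (z : C) : Rabs (Im z) <= Cmod z.
Proof.
  destruct z as [x y]; generalize (Rmax_Cmod (x, y)); simpl.
  unfold Rmax; destruct (Rle_dec _ _); lra.
Qed.

Lemma Cmod_le_Re_Im (z : C) : Cmod z <= Rabs (Re z) + Rabs (Im z).
Proof.
  destruct z as [x y]; change (Re (x, y)) with x; change (Im (x, y)) with y.
  assert (E : (x, y) = (RtoC x + Ci * RtoC y)%C)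
    by (unfold RtoC, Ci, Cplus, Cmult; simpl; f_equal; ring).
  rewrite E; eapply Rle_trans; [apply Cmod_triangle|].
  rewrite Cmod_mult, Cmod_Ci, !Cmod_R; lra.
Qed.

Lemma Cmod_sub_sym (a b : C) : Cmod (a - b) = Cmod (b - a).
Proof. rewrite <- Cmod_opp; f_equal; ring. Qed.

Lemma Cmod_sub_triangle (a b c : C) : Cmod (a - c) <= Cmod (a - b) + Cmod (b - c).
Proof. replace (a - c)%C with ((a - b) + (b - c))%C by ring; apply Cmod_triangle. Qed.

Lemma Cmod_sub_rev (a b : C) : Cmod a - Cmod b <= Cmod (a - b).
Proof.
  generalize (Cmod_triangle (a - b) b); replace (a - b + b)%C with a by ring; lra.
Qed.

Lemma Cmod_sub_gt_0 (z w : C) : z <> w -> 0 < Cmod (z - w).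
Proof. intros H; apply Cmod_gt_0, Cminus_eq_contra, H. Qed.

Lemma Cmod_sub_diag (z : C) : Cmod (z - z) = 0.
Proof. replace (z - z)%C with (RtoC 0) by ring; apply Cmod_0. Qed.

Definition Ccont (f : C -> C) (z : C) : Prop :=
  forall eps, 0 < eps -> exists d, 0 < d /\
    forall u, Cmod (u - z) < d -> Cmod (f u - f z) < eps.

Definition Cderive (f : C -> C) (z : C) (l : C) : Prop :=
  forall eps, 0 < eps -> exists d, 0 < d /\
    forall u, Cmod (u - z) < d -> Cmod (f u - f z - l * (u - z)) <= eps * Cmod (u - z).

Definition Cdiff (f : C -> C) (z : C) : Prop := exists l, Cderive f z l.

Lemma Ccont_const (c z : C) : Ccont (fun _ => c) z.
Proof. intros e He; exists 1; split; [lra|]; intros u _; rewrite Cmod_sub_diag; lra. Qed.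

Lemma Ccont_id (z : C) : Ccont (fun u => u) z.
Proof. intros e He; exists e; split; auto. Qed.

Lemma Ccont_plus f g z : Ccont f z -> Ccont g z -> Ccont (fun u => f u + g u)%C z.
Proof.
  intros Hf Hg e He.
  destruct (Hf (e / 2)) as [d1 [Hd1 H1]]; [lra|].
  destruct (Hg (e / 2)) as [d2 [Hd2 H2]]; [lra|].
  exists (Rmin d1 d2); split; [apply Rmin_pos; auto|]; intros u Hu.
  replace (f u + g u - (f z + g z))%C with ((f u - f z) + (g u - g z))%C by ring.
  eapply Rle_lt_trans; [apply Cmod_triangle|].
  generalize (H1 u (Rlt_le_trans _ _ _ Hu (Rmin_l _ _)))
    (H2 u (Rlt_le_trans _ _ _ Hu (Rmin_r _ _))); lra.
Qed.

Lemma Ccont_opp f z : Ccont f z -> Ccont (fun u => - f u)%C z.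
Proof.
  intros Hf e He; destruct (Hf e He) as [d [Hd H]]; exists d; split; auto.
  intros u Hu; replace (- f u - - f z)%C with (- (f u - f z))%C by ring.
  rewrite Cmod_opp; auto.
Qed.

Lemma Ccont_minus f g z : Ccont f z -> Ccont g z -> Ccont (fun u => f u - g u)%C z.
Proof. intros; apply (Ccont_plus f (fun u => - g u)%C); auto using Ccont_opp. Qed.

Lemma Ccont_mult f g z : Ccont f z -> Ccont g z -> Ccont (fun u => f u * g u)%C z.
Proof.
  intros Hf Hg e He.
  set (A := Cmod (f z)); set (B := Cmod (g z)).
  assert (HA : 0 <= A) by apply Cmod_ge_0; assert (HB : 0 <= B) by apply Cmod_ge_0.
  destruct (Hf (e / (2 * (B + 1)))) as [d1 [Hd1 H1]].
  { apply Rdiv_lt_0_compat; lra. }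
  destruct (Hg (Rmin 1 (e / (2 * (A + 1))))) as [d2 [Hd2 H2]].
  { apply Rmin_pos; [lra | apply Rdiv_lt_0_compat; lra]. }
  exists (Rmin d1 d2); split; [apply Rmin_pos; auto|]; intros u Hu.
  specialize (H1 u (Rlt_le_trans _ _ _ Hu (Rmin_l _ _))).
  specialize (H2 u (Rlt_le_trans _ _ _ Hu (Rmin_r _ _))).
  generalize (Rmin_l 1 (e / (2 * (A + 1)))) (Rmin_r 1 (e / (2 * (A + 1)))); intros M1 M2.
  replace (f u * g u - f z * g z)%C with ((f u - f z) * g u + f z * (g u - g z))%C by ring.
  eapply Rle_lt_trans; [apply Cmod_triangle|]; rewrite !Cmod_mult; fold A.
  assert (Hgu : Cmod (g u) <= B + 1) by (generalize (Cmod_sub_rev (g u) (g z)); fold B; lra).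
  assert (T1 : Cmod (f u - f z) * Cmod (g u) < e / (2 * (B + 1)) * (B + 1)).
  { apply Rle_lt_trans with (Cmod (f u - f z) * (B + 1)).
    - apply Rmult_le_compat_l; [apply Cmod_ge_0 | lra].
    - apply Rmult_lt_compat_r; lra. }
  assert (T2 : A * Cmod (g u - g z) <= (A + 1) * (e / (2 * (A + 1)))).
  { apply Rmult_le_compat; try apply Cmod_ge_0; lra. }
  replace (e / (2 * (B + 1)) * (B + 1)) with (e / 2) in * by (field; lra).
  replace ((A + 1) * (e / (2 * (A + 1)))) with (e / 2) in * by (field; lra).
  lra.
Qed.

Lemma Ccont_inv f z : Ccont f z -> f z <> 0%C -> Ccont (fun u => / f u)%C z.
Proof.
  intros Hf Hz e He.
  set (A := Cmod (f z)); assert (HA : 0 < A) by (apply Cmod_gt_0; auto).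
  destruct (Hf (Rmin (A / 2) (e * A * A / 2))) as [d [Hd H]].
  { apply Rmin_pos; [lra|]; apply Rdiv_lt_0_compat; [|lra].
    apply Rmult_lt_0_compat; [apply Rmult_lt_0_compat|]; lra. }
  exists d; split; auto; intros u Hu; specialize (H u Hu).
  generalize (Rmin_l (A / 2) (e * A * A / 2)) (Rmin_r (A / 2) (e * A * A / 2)); intros M1 M2.
  assert (Hfu : A / 2 < Cmod (f u))
    by (generalize (Cmod_sub_rev (f z) (f u)); rewrite Cmod_sub_sym; fold A; lra).
  assert (Hfu0 : f u <> 0%C) by (intro E; rewrite E, Cmod_0 in Hfu; lra).
  replace (/ f u - / f z)%C with ((f z - f u) / (f u * f z))%C by (field; auto).
  rewrite Cmod_div by (apply Cmult_neq_0; auto).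
  rewrite Cmod_mult, Cmod_sub_sym; fold A.
  apply Rmult_lt_reg_r with (Cmod (f u) * A); [apply Rmult_lt_0_compat; lra|].
  unfold Rdiv; rewrite Rmult_assoc, Rinv_l, Rmult_1_r by (apply Rgt_not_eq, Rmult_lt_0_compat; lra).
  apply Rlt_le_trans with (e * A * A / 2); [lra|].
  replace (e * A * A / 2) with (e * (A / 2 * A)) by field.
  apply Rmult_le_compat_l; [lra|]; apply Rmult_le_compat_r; lra.
Qed.

Lemma Ccont_pow f z n : Ccont f z -> Ccont (fun u => (f u) ^ n)%C z.
Proof. intros Hf; induction n; simpl; [apply Ccont_const | apply Ccont_mult; auto]. Qed.

Lemma Ccont_inv_sub (w z : C) : z <> w -> Ccont (fun u => / (u - w))%C z.
Proof.
  intros H; apply Ccont_inv; [apply Ccont_minus; [apply Ccont_id | apply Ccont_const]|].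
  apply Cminus_eq_contra, H.
Qed.

Lemma Cderive_Ccont f z l : Cderive f z l -> Ccont f z.
Proof.
  intros H e He; destruct (H 1 Rlt_0_1) as [d [Hd Hd']].
  assert (Hl : 0 <= Cmod l) by apply Cmod_ge_0.
  exists (Rmin d (e / (Cmod l + 2))); split.
  { apply Rmin_pos; auto; apply Rdiv_lt_0_compat; lra. }
  intros u Hu.
  specialize (Hd' u (Rlt_le_trans _ _ _ Hu (Rmin_l _ _))).
  assert (Hu2 := Rlt_le_trans _ _ _ Hu (Rmin_r _ _)).
  assert (HD : 0 <= Cmod (u - z)) by apply Cmod_ge_0.
  replace (f u - f z)%C with ((f u - f z - l * (u - z)) + l * (u - z))%C by ring.
  eapply Rle_lt_trans; [apply Cmod_triangle|]; rewrite Cmod_mult.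
  apply Rle_lt_trans with ((Cmod l + 1) * Cmod (u - z)); [nra|].
  apply Rle_lt_trans with ((Cmod l + 1) * (e / (Cmod l + 2))); [apply Rmult_le_compat_l; lra|].
  apply Rmult_lt_reg_r with (Cmod l + 2); [lra|]; field_simplify; lra.
Qed.

Lemma Cdiff_Ccont f z : Cdiff f z -> Ccont f z.
Proof. intros [l Hl]; eapply Cderive_Ccont; eauto. Qed.

Definition Rcont (f : R -> C) (t : R) : Prop :=
  forall eps, 0 < eps -> exists d, 0 < d /\
    forall s, Rabs (s - t) < d -> Cmod (f s - f t) < eps.

Definition Rcont_on (f : R -> C) (a b : R) : Prop := forall t, a <= t <= b -> Rcont f t.

Definition Rderive (F : R -> C) (t : R) (l : C) : Prop :=
  forall eps, 0 < eps -> exists d, 0 < d /\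
    forall s, Rabs (s - t) < d -> Cmod (F s - F t - RtoC (s - t) * l) <= eps * Rabs (s - t).

(* [Re] and [Im] are the two instances of [p]. *)
Section RealComponent.
Variable p : C -> R.
Hypothesis p_linear : forall (a b : C) (h : R), p (a + RtoC h * b)%C = p a + h * p b.
Hypothesis p_bound : forall z, Rabs (p z) <= Cmod z.

Lemma component_sub (a b : C) : p (a - b)%C = p a - p b.
Proof.
  replace (a - b)%C with (a + RtoC (-1) * b)%C
    by (unfold RtoC; apply injective_projections; simpl; ring).
  rewrite p_linear; ring.
Qed.

Lemma Rcont_component f t : Rcont f t -> continuous (fun s => p (f s)) t.
Proof.
  intros H; apply continuity_pt_filterlim.
  unfold continuity_pt, continue_in, limit1_in, limit_in; simpl; unfold R_dist.
  intros e He; destruct (H e He) as [d [Hd H']]; exists d; split; auto.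
  intros x [_ Hx]; rewrite <- component_sub.
  eapply Rle_lt_trans; [apply p_bound | apply H', Hx].
Qed.

Lemma ex_RInt_component f a b : a <= b -> Rcont_on f a b -> ex_RInt (fun s => p (f s)) a b.
Proof.
  intros Hab H; apply (@ex_RInt_continuous R_CompleteNormedModule).
  rewrite Rmin_left, Rmax_right; auto; intros z Hz; apply Rcont_component, H, Hz.
Qed.

Lemma Rderive_component F t l : Rderive F t l -> is_derive (fun s => p (F s)) t (p l).
Proof.
  intros H; apply is_derive_Reals; intros e He.
  destruct (H (e / 2)) as [d [Hd H']]; [lra|].
  exists (mkposreal d Hd); intros h Hh0 Hh; simpl in Hh.
  specialize (H' (t + h)); replace (t + h - t) with h in H' by ring.
  assert (Hr := Rle_trans _ _ _ (p_bound _) (H' Hh)).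
  replace (F (t + h)%R - F t - RtoC h * l)%C with (F (t + h)%R - F t + RtoC (- h) * l)%C in Hr
    by (unfold RtoC; apply injective_projections; simpl; ring).
  rewrite p_linear, component_sub in Hr.
  replace ((p (F (t + h)) - p (F t)) / h - p l)
    with ((p (F (t + h)) - p (F t) + - h * p l) / h) by (field; auto).
  unfold Rdiv; rewrite Rabs_mult, Rabs_inv.
  assert (0 < Rabs h) by (apply Rabs_pos_lt; auto).
  apply Rmult_lt_reg_r with (Rabs h); auto; rewrite Rmult_assoc, Rinv_l by lra; nra.
Qed.

Lemma RInt_component_FTC F f a b : a <= b ->
  (forall t, a <= t <= b -> Rderive F t (f t)) -> Rcont_on f a b ->
  RInt (fun s => p (f s)) a b = p (F b) - p (F a).
Proof.
  intros Hab HF Hf; apply is_RInt_unique.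
  apply (is_RInt_derive (fun s => p (F s)) (fun s => p (f s)));
    rewrite Rmin_left, Rmax_right; auto; intros t Ht.
  - apply Rderive_component, HF, Ht.
  - apply Rcont_component, Hf, Ht.
Qed.

Lemma RInt_component_pos f a b : a < b -> Rcont_on f a b ->
  (forall t, a < t < b -> 0 < p (f t)) -> 0 < RInt (fun t => p (f t)) a b.
Proof.
  intros Hab Hf Hp; apply RInt_gt_0; auto; intros t Ht; apply Rcont_component, Hf, Ht.
Qed.

Lemma RInt_component_neg f a b : a < b -> Rcont_on f a b ->
  (forall t, a < t < b -> p (f t) < 0) -> RInt (fun t => p (f t)) a b < 0.
Proof.
  intros Hab Hf Hp.
  assert (H : 0 < RInt (fun t => - p (f t)) a b).
  { apply RInt_gt_0; auto.
    - intros t Ht; generalize (Hp t Ht); lra.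
    - intros t Ht; apply (continuous_opp (fun s => p (f s))), Rcont_component, Hf, Ht. }
  rewrite (RInt_opp (fun t => p (f t))) in H; [change (0 < - RInt (fun t => p (f t)) a b) in H; lra|].
  apply ex_RInt_component; auto; lra.
Qed.

End RealComponent.

Lemma Re_linear (a b : C) (h : R) : Re (a + RtoC h * b)%C = Re a + h * Re b.
Proof. destruct a, b; simpl; ring. Qed.

Lemma Im_linear (a b : C) (h : R) : Im (a + RtoC h * b)%C = Im a + h * Im b.
Proof. destruct a, b; simpl; ring. Qed.

Definition CInt (f : R -> C) (a b : R) : C :=
  (RInt (fun t => Re (f t)) a b, RInt (fun t => Im (f t)) a b).

Lemma ex_RInt_Re f a b : a <= b -> Rcont_on f a b -> ex_RInt (fun s => Re (f s)) a b.
Proof. apply ex_RInt_component; [apply Re_linear | apply re_le_Cmod]. Qed.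

Lemma ex_RInt_Im f a b : a <= b -> Rcont_on f a b -> ex_RInt (fun s => Im (f s)) a b.
Proof. apply ex_RInt_component; [apply Im_linear | apply Cmod_Im_le]. Qed.

Lemma Rcont_on_scal c f a b : Rcont_on f a b -> Rcont_on (fun t => c * f t)%C a b.
Proof.
  intros Hf t Ht e He.
  assert (Hc : 0 <= Cmod c) by apply Cmod_ge_0.
  destruct (Hf t Ht (e / (Cmod c + 1))) as [d [Hd H]]; [apply Rdiv_lt_0_compat; lra|].
  exists d; split; auto; intros s Hs; specialize (H s Hs).
  replace (c * f s - c * f t)%C with (c * (f s - f t))%C by ring; rewrite Cmod_mult.
  apply Rle_lt_trans with ((Cmod c + 1) * Cmod (f s - f t)).
  - apply Rmult_le_compat_r; [apply Cmod_ge_0 | lra].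
  - apply Rlt_le_trans with ((Cmod c + 1) * (e / (Cmod c + 1))).
    + apply Rmult_lt_compat_l; lra.
    + right; field; lra.
Qed.

Lemma CInt_plus f g a b : a <= b -> Rcont_on f a b -> Rcont_on g a b ->
  CInt (fun t => f t + g t)%C a b = (CInt f a b + CInt g a b)%C.
Proof.
  intros Hab Hf Hg; unfold CInt, Cplus; cbn -[RInt]; f_equal.
  - apply (RInt_plus (fun t => Re (f t)) (fun t => Re (g t))); auto using ex_RInt_Re.
  - apply (RInt_plus (fun t => Im (f t)) (fun t => Im (g t))); auto using ex_RInt_Im.
Qed.

Lemma CInt_scal (c : C) f a b : a <= b -> Rcont_on f a b ->
  CInt (fun t => c * f t)%C a b = (c * CInt f a b)%C.
Proof.
  intros Hab Hf; destruct c as [c1 c2]; unfold CInt, Cmult; cbn -[RInt].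
  assert (E1 := ex_RInt_Re f a b Hab Hf); assert (E2 := ex_RInt_Im f a b Hab Hf).
  f_equal.
  - rewrite (RInt_minus (fun t => c1 * Re (f t)) (fun t => c2 * Im (f t)))
      by (apply (ex_RInt_scal (V := R_NormedModule)); auto).
    rewrite (RInt_scal (fun t => Re (f t))), (RInt_scal (fun t => Im (f t))); auto.
  - rewrite (RInt_plus (fun t => c1 * Im (f t)) (fun t => c2 * Re (f t)))
      by (apply (ex_RInt_scal (V := R_NormedModule)); auto).
    rewrite (RInt_scal (fun t => Re (f t))), (RInt_scal (fun t => Im (f t))); auto.
Qed.

Lemma CInt_ext f g a b : a <= b -> (forall t, a <= t <= b -> f t = g t) ->
  CInt f a b = CInt g a b.
Proof.
  intros Hab H; unfold CInt; f_equal; apply RInt_ext;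
    rewrite Rmin_left, Rmax_right; auto; intros x Hx; rewrite H; auto; lra.
Qed.

Lemma CInt_Chasles f a b c : a <= b -> b <= c -> Rcont_on f a c ->
  (CInt f a b + CInt f b c)%C = CInt f a c.
Proof.
  intros Hab Hbc Hf; unfold CInt, Cplus; cbn -[RInt].
  assert (Hl : Rcont_on f a b) by (intros t Ht; apply Hf; lra).
  assert (Hr : Rcont_on f b c) by (intros t Ht; apply Hf; lra).
  f_equal.
  - apply (RInt_Chasles (fun t => Re (f t))); auto using ex_RInt_Re.
  - apply (RInt_Chasles (fun t => Im (f t))); auto using ex_RInt_Im.
Qed.

(* Rotating by the unit [u] with [u * I = |I|] reduces the bound to one on [Re]. *)
Lemma CInt_norm f a b B : a <= b -> Rcont_on f a b ->
  (forall t, a <= t <= b -> Cmod (f t) <= B) -> Cmod (CInt f a b) <= (b - a) * B.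
Proof.
  intros Hab Hf HB.
  destruct (Req_dec (Cmod (CInt f a b)) 0) as [E|E].
  { rewrite E; apply Rmult_le_pos; [lra|].
    apply Rle_trans with (Cmod (f a)); [apply Cmod_ge_0 | apply HB; lra]. }
  set (I := CInt f a b) in *; set (m := Cmod I) in *.
  assert (Hm : 0 < m) by (generalize (Cmod_ge_0 I); fold m; lra).
  assert (HmC : RtoC m <> 0%C) by (intro H; injection H; lra).
  set (u := (Cconj I / RtoC m)%C).
  assert (Hu : Cmod u = 1).
  { unfold u; rewrite Cmod_div, Cmod_conj, Cmod_R, Rabs_pos_eq by (auto; lra).
    fold m; field; lra. }
  assert (HuI : (u * I)%C = RtoC m).
  { unfold u; replace (Cconj I / RtoC m * I)%C with ((I * Cconj I) / RtoC m)%C by (field; auto).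
    rewrite <- Cmod2_conj; fold m.
    replace (RtoC (m ^ 2)) with (RtoC m * RtoC m)%C
      by (unfold RtoC, Cmult; apply injective_projections; simpl; ring).
    field; auto. }
  assert (Heq : m = RInt (fun t => Re (u * f t)%C) a b).
  { change (RInt (fun t => Re (u * f t)%C) a b) with (Re (CInt (fun t => u * f t)%C a b)).
    rewrite CInt_scal by auto; fold I; rewrite HuI; reflexivity. }
  rewrite Heq; apply Rle_trans with (RInt (fun _ => B) a b).
  - apply RInt_le; auto using ex_RInt_Re, Rcont_on_scal, ex_RInt_const.
    intros x Hx; eapply Rle_trans; [apply Rle_abs|]; eapply Rle_trans; [apply re_le_Cmod|].
    rewrite Cmod_mult, Hu, Rmult_1_l; apply HB; lra.
  - rewrite RInt_const; right; reflexivity.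
Qed.

Lemma CInt_FTC F f a b : a <= b -> (forall t, a <= t <= b -> Rderive F t (f t)) ->
  Rcont_on f a b -> CInt f a b = (F b - F a)%C.
Proof.
  intros Hab HF Hf; unfold CInt; apply injective_projections; cbn -[RInt].
  - rewrite (RInt_component_FTC Re Re_linear re_le_Cmod F f); auto.
  - rewrite (RInt_component_FTC Im Im_linear Cmod_Im_le F f); auto.
Qed.

(** * Integrals over boundaries of rectangles *)

Definition rect_int (f : C -> C) (x1 x2 y1 y2 : R) : C :=
  (CInt (fun x => f (x, y1)) x1 x2 + Ci * CInt (fun y => f (x2, y)) y1 y2
  - CInt (fun x => f (x, y2)) x1 x2 - Ci * CInt (fun y => f (x1, y)) y1 y2)%C.

Definition in_rect (x1 x2 y1 y2 : R) (z : C) : Prop :=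
  x1 <= Re z <= x2 /\ y1 <= Im z <= y2.

Definition on_boundary (x1 x2 y1 y2 : R) (z : C) : Prop :=
  in_rect x1 x2 y1 y2 z /\ (Re z = x1 \/ Re z = x2 \/ Im z = y1 \/ Im z = y2).

Definition Ccont_on (D : C -> Prop) (f : C -> C) : Prop := forall z, D z -> Ccont f z.

Lemma Ccont_on_plus D f g : Ccont_on D f -> Ccont_on D g -> Ccont_on D (fun z => f z + g z)%C.
Proof. intros Hf Hg z Hz; apply Ccont_plus; auto. Qed.

Lemma Ccont_on_minus D f g : Ccont_on D f -> Ccont_on D g -> Ccont_on D (fun z => f z - g z)%C.
Proof. intros Hf Hg z Hz; apply Ccont_minus; auto. Qed.

Lemma Ccont_on_mult D f g : Ccont_on D f -> Ccont_on D g -> Ccont_on D (fun z => f z * g z)%C.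
Proof. intros Hf Hg z Hz; apply Ccont_mult; auto. Qed.

Lemma Ccont_on_scal D c f : Ccont_on D f -> Ccont_on D (fun z => c * f z)%C.
Proof. intros Hf z Hz; apply Ccont_mult; [apply Ccont_const | auto]. Qed.

Lemma Ccont_on_sub (D D' : C -> Prop) f : (forall z, D' z -> D z) -> Ccont_on D f -> Ccont_on D' f.
Proof. intros H Hf z Hz; apply Hf, H, Hz. Qed.

Lemma Ccont_on_boundary x1 x2 y1 y2 f :
  Ccont_on (in_rect x1 x2 y1 y2) f -> Ccont_on (on_boundary x1 x2 y1 y2) f.
Proof. apply Ccont_on_sub; intros z [Hz _]; exact Hz. Qed.

Lemma Cmod_sub_horizontal (s x y : R) : Cmod ((s, y) - (x, y))%C = Rabs (s - x).
Proof.
  replace ((s, y) - (x, y))%C with (RtoC (s - x))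
    by (unfold RtoC; apply injective_projections; simpl; ring).
  apply Cmod_R.
Qed.

Lemma Cmod_sub_vertical (s x y : R) : Cmod ((x, s) - (x, y))%C = Rabs (s - y).
Proof.
  replace ((x, s) - (x, y))%C with (Ci * RtoC (s - y))%C
    by (unfold RtoC, Ci; apply injective_projections; simpl; ring).
  rewrite Cmod_mult, Cmod_Ci, Cmod_R; ring.
Qed.

Lemma Rcont_horizontal f x y : Ccont f (x, y) -> Rcont (fun s => f (s, y)) x.
Proof.
  intros H e He; destruct (H e He) as [d [Hd H']]; exists d; split; auto.
  intros s Hs; apply H'; rewrite Cmod_sub_horizontal; auto.
Qed.

Lemma Rcont_vertical f x y : Ccont f (x, y) -> Rcont (fun s => f (x, s)) y.
Proof.
  intros H e He; destruct (H e He) as [d [Hd H']]; exists d; split; auto.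
  intros s Hs; apply H'; rewrite Cmod_sub_vertical; auto.
Qed.

Lemma Rderive_horizontal F x y l : Cderive F (x, y) l -> Rderive (fun s => F (s, y)) x l.
Proof.
  intros H e He; destruct (H e He) as [d [Hd H']]; exists d; split; auto.
  intros s Hs; specialize (H' (s, y)); rewrite Cmod_sub_horizontal in H'.
  replace ((s, y) - (x, y))%C with (RtoC (s - x)) in H'
    by (unfold RtoC; apply injective_projections; simpl; ring).
  rewrite Cmult_comm; exact (H' Hs).
Qed.

Lemma Rderive_vertical F x y l : Cderive F (x, y) l -> Rderive (fun s => F (x, s)) y (Ci * l)%C.
Proof.
  intros H e He; destruct (H e He) as [d [Hd H']]; exists d; split; auto.
  intros s Hs; specialize (H' (x, s)); rewrite Cmod_sub_vertical in H'.
  replace ((x, s) - (x, y))%C with (Ci * RtoC (s - y))%C in H'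
    by (unfold RtoC, Ci; apply injective_projections; simpl; ring).
  replace (RtoC (s - y) * (Ci * l))%C with (l * (Ci * RtoC (s - y)))%C by ring.
  exact (H' Hs).
Qed.

Section Rectangle.
Variables (x1 x2 y1 y2 : R).
Hypotheses (Hx : x1 <= x2) (Hy : y1 <= y2).

Lemma Rcont_on_sides f : Ccont_on (on_boundary x1 x2 y1 y2) f ->
  Rcont_on (fun x => f (x, y1)) x1 x2 /\ Rcont_on (fun x => f (x, y2)) x1 x2 /\
  Rcont_on (fun y => f (x1, y)) y1 y2 /\ Rcont_on (fun y => f (x2, y)) y1 y2.
Proof.
  intros Hf; repeat split; intros t Ht;
    first [apply Rcont_horizontal | apply Rcont_vertical]; apply Hf;
    repeat split; simpl; tauto || lra.
Qed.

Lemma rect_int_plus f g :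
  Ccont_on (on_boundary x1 x2 y1 y2) f -> Ccont_on (on_boundary x1 x2 y1 y2) g ->
  rect_int (fun z => f z + g z)%C x1 x2 y1 y2 = (rect_int f x1 x2 y1 y2 + rect_int g x1 x2 y1 y2)%C.
Proof.
  intros Hf Hg; unfold rect_int.
  destruct (Rcont_on_sides f Hf) as (F1 & F2 & F3 & F4).
  destruct (Rcont_on_sides g Hg) as (G1 & G2 & G3 & G4).
  rewrite !CInt_plus by auto; ring.
Qed.

Lemma rect_int_scal c f : Ccont_on (on_boundary x1 x2 y1 y2) f ->
  rect_int (fun z => c * f z)%C x1 x2 y1 y2 = (c * rect_int f x1 x2 y1 y2)%C.
Proof.
  intros Hf; unfold rect_int; destruct (Rcont_on_sides f Hf) as (F1 & F2 & F3 & F4).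
  rewrite !CInt_scal by auto; ring.
Qed.

Lemma rect_int_minus f g :
  Ccont_on (on_boundary x1 x2 y1 y2) f -> Ccont_on (on_boundary x1 x2 y1 y2) g ->
  rect_int (fun z => f z - g z)%C x1 x2 y1 y2 = (rect_int f x1 x2 y1 y2 - rect_int g x1 x2 y1 y2)%C.
Proof.
  intros Hf Hg.
  replace (fun z => f z - g z)%C with (fun z => f z + RtoC (-1) * g z)%C
    by (apply functional_extensionality; intros z; unfold RtoC;
        apply injective_projections; simpl; ring).
  rewrite rect_int_plus, rect_int_scal by auto using Ccont_on_scal.
  unfold RtoC; apply injective_projections; simpl; ring.
Qed.

Lemma rect_int_ext f g : (forall z, on_boundary x1 x2 y1 y2 z -> f z = g z) ->
  rect_int f x1 x2 y1 y2 = rect_int g x1 x2 y1 y2.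
Proof.
  intros H; unfold rect_int.
  rewrite (CInt_ext (fun x => f (x, y1)) (fun x => g (x, y1))),
    (CInt_ext (fun x => f (x, y2)) (fun x => g (x, y2))),
    (CInt_ext (fun y => f (x1, y)) (fun y => g (x1, y))),
    (CInt_ext (fun y => f (x2, y)) (fun y => g (x2, y))); auto;
    intros t Ht; apply H; repeat split; simpl; tauto || lra.
Qed.

Lemma rect_int_norm f B : Ccont_on (on_boundary x1 x2 y1 y2) f ->
  (forall z, on_boundary x1 x2 y1 y2 z -> Cmod (f z) <= B) ->
  Cmod (rect_int f x1 x2 y1 y2) <= 2 * ((x2 - x1) + (y2 - y1)) * B.
Proof.
  intros Hf HB; unfold rect_int; destruct (Rcont_on_sides f Hf) as (F1 & F2 & F3 & F4).
  assert (B1 : Cmod (CInt (fun x => f (x, y1)) x1 x2) <= (x2 - x1) * B).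
  { apply CInt_norm; auto; intros t Ht; apply HB; repeat split; simpl; tauto || lra. }
  assert (B2 : Cmod (CInt (fun x => f (x, y2)) x1 x2) <= (x2 - x1) * B).
  { apply CInt_norm; auto; intros t Ht; apply HB; repeat split; simpl; tauto || lra. }
  assert (B3 : Cmod (CInt (fun y => f (x1, y)) y1 y2) <= (y2 - y1) * B).
  { apply CInt_norm; auto; intros t Ht; apply HB; repeat split; simpl; tauto || lra. }
  assert (B4 : Cmod (CInt (fun y => f (x2, y)) y1 y2) <= (y2 - y1) * B).
  { apply CInt_norm; auto; intros t Ht; apply HB; repeat split; simpl; tauto || lra. }
  set (a := CInt (fun x => f (x, y1)) x1 x2) in *; set (b := CInt (fun y => f (x2, y)) y1 y2) in *;
  set (c := CInt (fun x => f (x, y2)) x1 x2) in *; set (d := CInt (fun y => f (x1, y)) y1 y2) in *.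
  replace (a + Ci * b - c - Ci * d)%C with (a + Ci * b + - c + - (Ci * d))%C by ring.
  assert (T3 := Cmod_triangle (a + Ci * b + - c) (- (Ci * d))).
  assert (T2 := Cmod_triangle (a + Ci * b) (- c)).
  assert (T1 := Cmod_triangle a (Ci * b)).
  rewrite !Cmod_opp, !Cmod_mult, Cmod_Ci in *; lra.
Qed.

Lemma rect_int_primitive F f :
  (forall z, on_boundary x1 x2 y1 y2 z -> Cderive F z (f z)) ->
  Ccont_on (on_boundary x1 x2 y1 y2) f -> rect_int f x1 x2 y1 y2 = RtoC 0.
Proof.
  intros HF Hf; unfold rect_int; destruct (Rcont_on_sides f Hf) as (F1 & F2 & F3 & F4).
  assert (HF' : forall x y, on_boundary x1 x2 y1 y2 (x, y) -> Cderive F (x, y) (f (x, y)))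
    by (intros; apply HF; auto).
  rewrite <- !CInt_scal by auto.
  rewrite (CInt_FTC (fun x => F (x, y1)) (fun x => f (x, y1))),
    (CInt_FTC (fun x => F (x, y2)) (fun x => f (x, y2))),
    (CInt_FTC (fun y => F (x1, y)) (fun y => Ci * f (x1, y))%C),
    (CInt_FTC (fun y => F (x2, y)) (fun y => Ci * f (x2, y))%C);
    auto using Rcont_on_scal.
  - ring.
  all: intros t Ht; first [apply Rderive_horizontal | apply Rderive_vertical];
    apply HF'; repeat split; simpl; tauto || lra.
Qed.

End Rectangle.

Lemma rect_int_split_x f x1 xm x2 y1 y2 : x1 <= xm <= x2 -> y1 <= y2 ->
  Ccont_on (on_boundary x1 x2 y1 y2) f ->
  rect_int f x1 x2 y1 y2 = (rect_int f x1 xm y1 y2 + rect_int f xm x2 y1 y2)%C.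
Proof.
  intros Hm Hy Hf; destruct (Rcont_on_sides x1 x2 y1 y2 ltac:(lra) Hy f Hf) as (F1 & F2 & _).
  unfold rect_int; rewrite <- (CInt_Chasles (fun x => f (x, y1)) x1 xm x2),
    <- (CInt_Chasles (fun x => f (x, y2)) x1 xm x2) by (auto; lra).
  ring.
Qed.

Lemma rect_int_split_y f x1 x2 y1 ym y2 : x1 <= x2 -> y1 <= ym <= y2 ->
  Ccont_on (on_boundary x1 x2 y1 y2) f ->
  rect_int f x1 x2 y1 y2 = (rect_int f x1 x2 y1 ym + rect_int f x1 x2 ym y2)%C.
Proof.
  intros Hx Hm Hf; destruct (Rcont_on_sides x1 x2 y1 y2 Hx ltac:(lra) f Hf) as (_ & _ & F3 & F4).
  unfold rect_int; rewrite <- (CInt_Chasles (fun y => f (x1, y)) y1 ym y2),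
    <- (CInt_Chasles (fun y => f (x2, y)) y1 ym y2) by (auto; lra).
  ring.
Qed.

Lemma Ccont_affine (A B z : C) : Ccont (fun u => A + B * u)%C z.
Proof. apply Ccont_plus; [apply Ccont_const | apply Ccont_mult; [apply Ccont_const | apply Ccont_id]]. Qed.

Lemma Cderive_quadratic (A B z : C) :
  Cderive (fun u => A * u + B * u * u / RtoC 2)%C z (A + B * z)%C.
Proof.
  intros e He; assert (HB : 0 <= Cmod B) by apply Cmod_ge_0.
  exists (e / (Cmod B + 1)); split; [apply Rdiv_lt_0_compat; lra|]; intros u Hu.
  assert (H2 : RtoC 2 <> 0%C) by (intro E; injection E; lra).
  replace (A * u + B * u * u / RtoC 2 - (A * z + B * z * z / RtoC 2) - (A + B * z) * (u - z))%C
    with ((B / RtoC 2) * (u - z) * (u - z))%C by (field; auto).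
  rewrite !Cmod_mult, Cmod_div, Cmod_R, Rabs_pos_eq by (auto; lra).
  apply Rmult_le_compat_r; [apply Cmod_ge_0|].
  apply Rle_trans with ((Cmod B + 1) * (e / (Cmod B + 1))); [|right; field; lra].
  apply Rmult_le_compat; [lra | apply Cmod_ge_0 | lra | lra].
Qed.

Lemma rect_int_affine A B x1 x2 y1 y2 : x1 <= x2 -> y1 <= y2 ->
  rect_int (fun u => A + B * u)%C x1 x2 y1 y2 = RtoC 0.
Proof.
  intros Hx Hy; apply (rect_int_primitive x1 x2 y1 y2 Hx Hy (fun u => A * u + B * u * u / RtoC 2)%C).
  - intros z _; apply Cderive_quadratic.
  - intros z _; apply Ccont_affine.
Qed.

Lemma rect_int_linearization f p l eps x1 x2 y1 y2 : x1 <= x2 -> y1 <= y2 -> 0 <= eps ->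
  in_rect x1 x2 y1 y2 p -> Ccont_on (on_boundary x1 x2 y1 y2) f ->
  (forall z, on_boundary x1 x2 y1 y2 z -> Cmod (f z - f p - l * (z - p)) <= eps * Cmod (z - p)) ->
  Cmod (rect_int f x1 x2 y1 y2) <= 2 * ((x2 - x1) + (y2 - y1)) * (eps * ((x2 - x1) + (y2 - y1))).
Proof.
  intros Hx Hy Heps [Hpx Hpy] Hf Hlin.
  assert (Haff : Ccont_on (on_boundary x1 x2 y1 y2) (fun u => f p - l * p + l * u)%C)
    by (intros z _; apply Ccont_affine).
  replace (rect_int f x1 x2 y1 y2) with (rect_int (fun u => f u - (f p - l * p + l * u))%C x1 x2 y1 y2)
    by (rewrite rect_int_minus, rect_int_affine by auto; ring).
  apply rect_int_norm; auto using Ccont_on_minus.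
  intros z Hz; replace (f z - (f p - l * p + l * z))%C with (f z - f p - l * (z - p))%C by ring.
  eapply Rle_trans; [apply Hlin, Hz|].
  apply Rmult_le_compat_l; auto.
  destruct Hz as [[Hzx Hzy] _]; eapply Rle_trans; [apply Cmod_le_Re_Im|].
  destruct z as [zx zy], p as [px py]; simpl in *.
  apply Rplus_le_compat; apply Rabs_le; lra.
Qed.

(** * Goursat's lemma *)

Lemma nested_intervals (a b : nat -> R) :
  (forall n, a n <= a (S n)) -> (forall n, b (S n) <= b n) -> (forall n, a n <= b n) ->
  exists p, forall n, a n <= p <= b n.
Proof.
  intros Ha Hb Hab.
  assert (Hmono : forall n k, a n <= a (n + k)%nat /\ b (n + k)%nat <= b n).
  { intros n k; induction k; rewrite ?Nat.add_0_r, ?Nat.add_succ_r; [lra|].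
    generalize (Ha (n + k)%nat) (Hb (n + k)%nat); lra. }
  assert (Hcross : forall m n, a m <= b n).
  { intros m n; destruct (Nat.le_ge_cases m n) as [H|H].
    - replace n with (m + (n - m))%nat by lia; generalize (Hmono m (n - m)%nat) (Hab (m + (n - m))%nat); lra.
    - replace m with (n + (m - n))%nat by lia; generalize (Hmono n (m - n)%nat) (Hab (n + (m - n))%nat); lra. }
  destruct (completeness (fun x => exists n, x = a n)) as [p [Hub Hlub]].
  - exists (b O); intros x [n ->]; apply Hcross.
  - exists (a O); exists O; reflexivity.
  - exists p; intros n; split.
    + apply Hub; exists n; reflexivity.
    + apply Hlub; intros x [m ->]; apply Hcross.
Qed.

Record rect := mk_rect { rx1 : R; rx2 : R; ry1 : R; ry2 : R }.

Definition rect_int_of (f : C -> C) (q : rect) : C := rect_int f (rx1 q) (rx2 q) (ry1 q) (ry2 q).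
Definition in_rect_of (q : rect) : C -> Prop := in_rect (rx1 q) (rx2 q) (ry1 q) (ry2 q).
Definition rect_size (q : rect) : R := (rx2 q - rx1 q) + (ry2 q - ry1 q).
Definition proper_rect (q : rect) : Prop := rx1 q <= rx2 q /\ ry1 q <= ry2 q.

Definition quarter (i j : bool) (q : rect) : rect :=
  let xm := (rx1 q + rx2 q) / 2 in let ym := (ry1 q + ry2 q) / 2 in
  mk_rect (if i then xm else rx1 q) (if i then rx2 q else xm)
          (if j then ym else ry1 q) (if j then ry2 q else ym).

Definition larger (f : C -> C) (q q' : rect) : rect :=
  if Rle_dec (Cmod (rect_int_of f q)) (Cmod (rect_int_of f q')) then q' else q.

Definition bisect (f : C -> C) (q : rect) : rect :=
  larger f (larger f (quarter false false q) (quarter true false q))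
           (larger f (quarter false true q) (quarter true true q)).

Lemma quarter_shape i j q : proper_rect q ->
  let q' := quarter i j q in
  proper_rect q' /\ rx1 q <= rx1 q' /\ rx2 q' <= rx2 q /\ ry1 q <= ry1 q' /\ ry2 q' <= ry2 q /\
  rx2 q' - rx1 q' = (rx2 q - rx1 q) / 2 /\ ry2 q' - ry1 q' = (ry2 q - ry1 q) / 2.
Proof. intros [Hx Hy]; destruct i, j; unfold proper_rect; simpl; lra. Qed.

Lemma bisect_quarter f q : exists i j, bisect f q = quarter i j q.
Proof.
  unfold bisect, larger.
  repeat destruct (Rle_dec _ _); eauto.
Qed.

Lemma rect_int_of_quarters f q : proper_rect q -> Ccont_on (in_rect_of q) f ->
  rect_int_of f q = (rect_int_of f (quarter false false q) + rect_int_of f (quarter true false q)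
            + rect_int_of f (quarter false true q) + rect_int_of f (quarter true true q))%C.
Proof.
  destruct q as [a1 a2 b1 b2]; unfold proper_rect, in_rect_of, rect_int_of; simpl; intros [Ha Hb] Hf.
  assert (Hsub : forall x1 x2 y1 y2, a1 <= x1 -> x2 <= a2 -> b1 <= y1 -> y2 <= b2 ->
    Ccont_on (on_boundary x1 x2 y1 y2) f).
  { intros x1 x2 y1 y2 h1 h2 h3 h4; apply (Ccont_on_sub (in_rect a1 a2 b1 b2)); [|exact Hf].
    intros z [[Hzx Hzy] _]; split; lra. }
  rewrite (rect_int_split_x f a1 ((a1 + a2) / 2) a2), (rect_int_split_y f a1 ((a1 + a2) / 2) b1 ((b1 + b2) / 2) b2),
    (rect_int_split_y f ((a1 + a2) / 2) a2 b1 ((b1 + b2) / 2) b2); try apply Hsub; try lra.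
  ring.
Qed.

Lemma Cmod_sum4_le (a b c d : C) m : Cmod a <= m -> Cmod b <= m -> Cmod c <= m -> Cmod d <= m ->
  Cmod (a + b + c + d) <= 4 * m.
Proof.
  intros; generalize (Cmod_triangle (a + b + c) d) (Cmod_triangle (a + b) c) (Cmod_triangle a b); lra.
Qed.

Lemma rect_int_of_bisect f q : proper_rect q -> Ccont_on (in_rect_of q) f ->
  Cmod (rect_int_of f q) <= 4 * Cmod (rect_int_of f (bisect f q)).
Proof.
  intros Hq Hf; rewrite rect_int_of_quarters by auto.
  apply Cmod_sum4_le; unfold bisect, larger; repeat destruct (Rle_dec _ _); lra.
Qed.

Section Goursat.
Variables (f : C -> C) (q : rect).
Hypothesis Hq : proper_rect q.
Hypothesis Hdiff : forall z, in_rect_of q z -> Cdiff f z.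

Let bisection (n : nat) : rect := Nat.iter n (bisect f) q.

Lemma bisections_shape n : proper_rect (bisection n) /\
  rx1 q <= rx1 (bisection n) /\ rx2 (bisection n) <= rx2 q /\ ry1 q <= ry1 (bisection n) /\ ry2 (bisection n) <= ry2 q /\
  rect_size (bisection n) = rect_size q * (/ 2) ^ n.
Proof.
  induction n as [|n IH];
    [change (bisection 0) with q; destruct Hq; unfold proper_rect, rect_size; simpl pow; repeat split; auto; lra|].
  destruct IH as (Hp & H1 & H2 & H3 & H4 & H5).
  change (bisection (S n)) with (bisect f (bisection n)).
  destruct (bisect_quarter f (bisection n)) as (i & j & ->).
  destruct (quarter_shape i j (bisection n) Hp) as (Hp' & G1 & G2 & G3 & G4 & G5 & G6).
  unfold rect_size in *; simpl pow; repeat split; try apply Hp'; try lra.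
Qed.

Lemma bisections_step n :
  rx1 (bisection n) <= rx1 (bisection (S n)) /\ rx2 (bisection (S n)) <= rx2 (bisection n) /\
  ry1 (bisection n) <= ry1 (bisection (S n)) /\ ry2 (bisection (S n)) <= ry2 (bisection n).
Proof.
  change (bisection (S n)) with (bisect f (bisection n)).
  destruct (bisect_quarter f (bisection n)) as (i & j & ->).
  destruct (quarter_shape i j (bisection n) (proj1 (bisections_shape n))) as (_ & G1 & G2 & G3 & G4 & _).
  auto.
Qed.

Lemma bisections_common_point : exists p, forall n, in_rect_of (bisection n) p.
Proof.
  destruct (nested_intervals (fun n => rx1 (bisection n)) (fun n => rx2 (bisection n))) as [px Hpx];
    try (intros n; apply (bisections_step n)); [intros n; apply (bisections_shape n)|].
  destruct (nested_intervals (fun n => ry1 (bisection n)) (fun n => ry2 (bisection n))) as [py Hpy];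
    try (intros n; apply (bisections_step n)); [intros n; apply (bisections_shape n)|].
  exists (px, py); intros n; split; simpl; auto.
Qed.

Lemma bisections_cont n : Ccont_on (in_rect_of (bisection n)) f.
Proof.
  destruct (bisections_shape n) as (_ & H1 & H2 & H3 & H4 & _).
  intros z [Hzx Hzy]; apply Cdiff_Ccont, Hdiff; split; lra.
Qed.

Lemma rect_int_of_bisections n : Cmod (rect_int_of f q) <= 4 ^ n * Cmod (rect_int_of f (bisection n)).
Proof.
  induction n as [|n IH]; [simpl; lra|].
  assert (H := rect_int_of_bisect f (bisection n) (proj1 (bisections_shape n)) (bisections_cont n)).
  change (bisection (S n)) with (bisect f (bisection n)); simpl pow.
  assert (0 <= 4 ^ n) by (apply pow_le; lra); nra.
Qed.

(* Near the common point [p], [f] is affine up to [eps |z - p|], so on the [n]-th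
   rectangle the integral is [O(eps 4^-n)], which beats the [4^n] amplification. *)
Lemma rect_int_of_le_eps p l : (forall n, in_rect_of (bisection n) p) -> Cderive f p l ->
  forall eps, 0 < eps -> Cmod (rect_int_of f q) <= 2 * eps * rect_size q ^ 2.
Proof.
  intros Hp Hl eps Heps; destruct (Hl eps Heps) as [d [Hd Hd']].
  set (S := rect_size q); assert (HS : 0 <= S) by (unfold S, rect_size; destruct Hq; lra).
  destruct (pow_lt_1_zero (/ 2) ltac:(rewrite Rabs_pos_eq; lra) (d / (S + 1))) as [N HN];
    [apply Rdiv_lt_0_compat; lra|].
  specialize (HN N (le_n N)); rewrite Rabs_pos_eq in HN by (apply pow_le; lra).
  destruct (bisections_shape N) as ([Hx Hy] & _ & _ & _ & _ & Hsize); fold S in Hsize.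
  assert (HSd : rect_size (bisection N) < d).
  { rewrite Hsize; apply Rle_lt_trans with ((S + 1) * (/ 2) ^ N).
    - apply Rmult_le_compat_r; [apply pow_le|]; lra.
    - apply Rlt_le_trans with ((S + 1) * (d / (S + 1))); [apply Rmult_lt_compat_l; lra | right; field; lra]. }
  assert (Hb : Cmod (rect_int_of f (bisection N)) <= 2 * rect_size (bisection N) * (eps * rect_size (bisection N))).
  { apply (rect_int_linearization f p l eps); auto; [lra | apply Hp | apply Ccont_on_boundary, bisections_cont|].
    intros z [[Hzx Hzy] _]; apply Hd'.
    eapply Rle_lt_trans; [apply Cmod_le_Re_Im|]; eapply Rle_lt_trans; [|apply HSd].
    destruct (Hp N) as [Hpx Hpy]; unfold rect_size in *; destruct z as [zx zy], p as [px py]; simpl in *.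
    apply Rplus_le_compat; apply Rabs_le; lra. }
  rewrite Hsize in Hb.
  eapply Rle_trans; [apply (rect_int_of_bisections N)|].
  apply Rle_trans with (4 ^ N * (2 * (S * (/ 2) ^ N) * (eps * (S * (/ 2) ^ N)))).
  - apply Rmult_le_compat_l; [apply pow_le; lra | exact Hb].
  - right; transitivity (2 * eps * S ^ 2 * (4 * / 2 * / 2) ^ N).
    + rewrite !Rpow_mult_distr; ring.
    + replace (4 * / 2 * / 2) with 1 by field; rewrite pow1; ring.
Qed.

Lemma goursat_rect : rect_int_of f q = RtoC 0.
Proof.
  destruct bisections_common_point as [p Hp]; destruct (Hdiff p (Hp O)) as [l Hl].
  apply Cmod_eq_0, Rle_antisym; [|apply Cmod_ge_0]; apply Rle_plus_epsilon; intros e He.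
  set (S2 := rect_size q ^ 2); assert (HS : 0 <= S2) by (apply pow2_ge_0).
  eapply Rle_trans; [apply (rect_int_of_le_eps p l Hp Hl (e / (2 * S2 + 1))), Rdiv_lt_0_compat; lra|].
  fold S2; apply Rle_trans with (e * (2 * S2 / (2 * S2 + 1))); [right; field; lra|].
  rewrite Rplus_0_l; rewrite <- (Rmult_1_r e) at 2; apply Rmult_le_compat_l; [lra|].
  apply Rmult_le_reg_r with (2 * S2 + 1); [lra|]; field_simplify; lra.
Qed.

End Goursat.

Lemma goursat f x1 x2 y1 y2 : x1 <= x2 -> y1 <= y2 ->
  (forall z, in_rect x1 x2 y1 y2 z -> Cdiff f z) -> rect_int f x1 x2 y1 y2 = RtoC 0.
Proof. intros Hx Hy H; apply (goursat_rect f (mk_rect x1 x2 y1 y2)); [split|]; auto. Qed.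

Lemma rect_int_reduce_to_square f x1 x2 y1 y2 w1 w2 t : 0 < t ->
  x1 <= w1 - t -> w1 + t <= x2 -> y1 <= w2 - t -> w2 + t <= y2 ->
  Ccont_on (in_rect x1 x2 y1 y2) f ->
  (forall z, in_rect x1 x2 y1 y2 z -> z <> (w1, w2) -> Cdiff f z) ->
  rect_int f x1 x2 y1 y2 = rect_int f (w1 - t) (w1 + t) (w2 - t) (w2 + t).
Proof.
  intros Ht h1 h2 h3 h4 Hc Hd.
  assert (Hsub : forall a1 a2 b1 b2, x1 <= a1 -> a2 <= x2 -> y1 <= b1 -> b2 <= y2 ->
    Ccont_on (on_boundary a1 a2 b1 b2) f).
  { intros a1 a2 b1 b2 g1 g2 g3 g4; apply (Ccont_on_sub (in_rect x1 x2 y1 y2)); [|exact Hc].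
    intros z [[Hzx Hzy] _]; split; lra. }
  assert (Hzero : forall a1 a2 b1 b2, x1 <= a1 <= a2 -> a2 <= x2 -> y1 <= b1 <= b2 -> b2 <= y2 ->
    (a2 < w1 \/ w1 < a1 \/ b2 < w2 \/ w2 < b1) -> rect_int f a1 a2 b1 b2 = RtoC 0).
  { intros a1 a2 b1 b2 g1 g2 g3 g4 Hout; apply goursat; try lra.
    intros z [Hzx Hzy]; apply Hd; [split; lra|].
    intros ->; simpl in *; lra. }
  rewrite (rect_int_split_x f x1 (w1 - t) x2), (rect_int_split_x f (w1 - t) (w1 + t) x2),
    (rect_int_split_y f (w1 - t) (w1 + t) y1 (w2 - t) y2),
    (rect_int_split_y f (w1 - t) (w1 + t) (w2 - t) (w2 + t) y2); try apply Hsub; try lra.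
  rewrite (Hzero x1 (w1 - t) y1 y2), (Hzero (w1 + t) x2 y1 y2),
    (Hzero (w1 - t) (w1 + t) y1 (w2 - t)), (Hzero (w1 - t) (w1 + t) (w2 + t) y2) by lra.
  ring.
Qed.

Ltac Rmin_bounds :=
  repeat match goal with
  | |- context [Rmin ?a ?b] =>
      assert_fails (assert (Rmin a b <= a) by assumption);
      pose proof (Rmin_l a b); pose proof (Rmin_r a b)
  | _ : context [Rmin ?a ?b] |- _ =>
      assert_fails (assert (Rmin a b <= a) by assumption);
      pose proof (Rmin_l a b); pose proof (Rmin_r a b)
  end.

Lemma goursat_except f x1 x2 y1 y2 w : x1 < Re w < x2 -> y1 < Im w < y2 -> Ccont f w ->
  (forall z, in_rect x1 x2 y1 y2 z -> z <> w -> Cdiff f z) -> rect_int f x1 x2 y1 y2 = RtoC 0.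
Proof.
  intros Hwx Hwy Hc Hd.
  assert (HC : Ccont_on (in_rect x1 x2 y1 y2) f).
  { intros z Hz; destruct (classic (z = w)) as [->|E]; auto; apply Cdiff_Ccont, Hd; auto. }
  destruct w as [w1 w2]; simpl in *.
  apply Cmod_eq_0, Rle_antisym; [|apply Cmod_ge_0]; apply Rle_plus_epsilon; intros e He.
  destruct (Hc 1 Rlt_0_1) as [d [Hd0 Hnear]].
  set (K := Cmod (f (w1, w2)) + 1).
  assert (HK : 0 < K) by (generalize (Cmod_ge_0 (f (w1, w2))); unfold K; lra).
  set (t := Rmin (Rmin (d / 4) (e / (8 * K)))
                 (Rmin (Rmin (w1 - x1) (x2 - w1)) (Rmin (w2 - y1) (y2 - w2)))).
  assert (Ht : 0 < t) by (unfold t; repeat apply Rmin_pos; try apply Rdiv_lt_0_compat; lra).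
  assert (Htd : t <= d / 4 /\ t <= e / (8 * K) /\ t <= w1 - x1 /\ t <= x2 - w1 /\ t <= w2 - y1 /\ t <= y2 - w2)
    by (unfold t; Rmin_bounds; lra).
  clearbody t.
  rewrite (rect_int_reduce_to_square f x1 x2 y1 y2 w1 w2 t) by (auto; lra).
  eapply Rle_trans; [apply (rect_int_norm (w1 - t) (w1 + t) (w2 - t) (w2 + t) ltac:(lra) ltac:(lra) f K)|].
  - apply (Ccont_on_sub (in_rect x1 x2 y1 y2)); [intros z [[Hzx Hzy] _]; split; lra | exact HC].
  - intros z [[Hzx Hzy] _].
    assert (Hz : Cmod (z - (w1, w2)) < d).
    { eapply Rle_lt_trans; [apply Cmod_le_Re_Im|]; destruct z as [zx zy]; simpl in *.
      apply Rle_lt_trans with (t + t); [apply Rplus_le_compat; apply Rabs_le; lra | lra]. }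
    generalize (Hnear z Hz) (Cmod_sub_rev (f z) (f (w1, w2))); unfold K; lra.
  - apply Rle_trans with (8 * (e / (8 * K)) * K).
    + apply Rmult_le_compat_r; lra.
    + right; field; lra.
Qed.

(** * Cauchy's formula on squares *)

Lemma Cderive_local f g z l r : 0 < r -> (forall u, Cmod (u - z) < r -> f u = g u) ->
  Cderive f z l -> Cderive g z l.
Proof.
  intros Hr E H e He; destruct (H e He) as [d [Hd H']].
  exists (Rmin d r); split; [apply Rmin_pos; auto|]; intros u Hu.
  rewrite <- (E u (Rlt_le_trans _ _ _ Hu (Rmin_r _ _))), <- (E z) by (rewrite Cmod_sub_diag; auto).
  apply H', (Rlt_le_trans _ _ _ Hu (Rmin_l _ _)).
Qed.

Lemma Cderive_minus_const f z l c : Cderive f z l -> Cderive (fun u => f u - c)%C z l.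
Proof.
  intros H e He; destruct (H e He) as [d [Hd H']]; exists d; split; auto; intros u Hu.
  replace (f u - c - (f z - c) - l * (u - z))%C with (f u - f z - l * (u - z))%C by ring; auto.
Qed.

Lemma Cderive_mult f g z a b : Cderive f z a -> Cderive g z b ->
  Cderive (fun u => f u * g u)%C z (a * g z + f z * b)%C.
Proof.
  intros Hf Hg e He.
  set (A := Cmod a); set (F := Cmod (f z)); set (B := Cmod (g z)).
  assert (HA : 0 <= A) by apply Cmod_ge_0; assert (HF : 0 <= F) by apply Cmod_ge_0;
  assert (HB : 0 <= B) by apply Cmod_ge_0.
  destruct (Hf (e / (3 * (B + 1)))) as [d1 [Hd1 H1]]; [apply Rdiv_lt_0_compat; lra|].
  destruct (Cderive_Ccont g z b Hg (Rmin 1 (e / (3 * (A + 1))))) as [d2 [Hd2 H2]];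
    [apply Rmin_pos; [lra | apply Rdiv_lt_0_compat; lra]|].
  destruct (Hg (e / (3 * (F + 1)))) as [d3 [Hd3 H3]]; [apply Rdiv_lt_0_compat; lra|].
  exists (Rmin d1 (Rmin d2 d3)); split; [repeat apply Rmin_pos; auto|]; intros u Hu.
  assert (Hu' : Cmod (u - z) < d1 /\ Cmod (u - z) < d2 /\ Cmod (u - z) < d3) by (Rmin_bounds; lra).
  destruct Hu' as (Hu1 & Hu2 & Hu3).
  specialize (H1 u Hu1); specialize (H2 u Hu2); specialize (H3 u Hu3).
  assert (M := Rmin_l 1 (e / (3 * (A + 1)))); assert (M' := Rmin_r 1 (e / (3 * (A + 1)))).
  replace (f u * g u - f z * g z - (a * g z + f z * b) * (u - z))%C with
    ((f u - f z - a * (u - z)) * g u + a * (u - z) * (g u - g z) + f z * (g u - g z - b * (u - z)))%C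
    by ring.
  set (D := Cmod (u - z)) in *; assert (HD : 0 <= D) by apply Cmod_ge_0.
  assert (Hgu : Cmod (g u) <= B + 1) by (generalize (Cmod_sub_rev (g u) (g z)); fold B; lra).
  eapply Rle_trans; [apply Cmod_triangle|]; eapply Rle_trans; [apply Rplus_le_compat_r, Cmod_triangle|].
  rewrite !Cmod_mult; fold A F D.
  assert (T1 : Cmod (f u - f z - a * (u - z)) * Cmod (g u) <= e / 3 * D).
  { apply Rle_trans with (e / (3 * (B + 1)) * D * (B + 1)).
    - apply Rmult_le_compat; try apply Cmod_ge_0; auto.
    - right; field; lra. }
  assert (T2 : A * D * Cmod (g u - g z) <= e / 3 * D).
  { apply Rle_trans with ((A + 1) * D * (e / (3 * (A + 1)))).
    - apply Rmult_le_compat; try apply Cmod_ge_0; try nra.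
    - right; field; lra. }
  assert (T3 : F * Cmod (g u - g z - b * (u - z)) <= e / 3 * D).
  { apply Rle_trans with ((F + 1) * (e / (3 * (F + 1)) * D)).
    - apply Rmult_le_compat; try apply Cmod_ge_0; lra.
    - right; field; lra. }
  lra.
Qed.

Lemma Cderive_inv_sub z w : z <> w -> Cderive (fun u => / (u - w))%C z (- / ((z - w) * (z - w)))%C.
Proof.
  intros Hzw e He; assert (Hzw' := Cminus_eq_contra _ _ Hzw).
  set (m := Cmod (z - w)); assert (Hm : 0 < m) by (apply Cmod_sub_gt_0; auto).
  exists (Rmin (m / 2) (e * m * m * m / 2)); split.
  { apply Rmin_pos; [lra|]; apply Rdiv_lt_0_compat; [repeat apply Rmult_lt_0_compat|]; lra. }
  intros u Hu.
  assert (Hu' : Cmod (u - z) < m / 2 /\ Cmod (u - z) < e * m * m * m / 2) by (Rmin_bounds; lra).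
  assert (Huw : m / 2 < Cmod (u - w))
    by (generalize (Cmod_sub_triangle z u w); rewrite (Cmod_sub_sym z u); fold m; lra).
  assert (Huw' : (u - w)%C <> RtoC 0) by (intro E; rewrite E, Cmod_0 in Huw; lra).
  replace (/ (u - w) - / (z - w) - - / ((z - w) * (z - w)) * (u - z))%C
    with ((u - z) * (u - z) / ((u - w) * (z - w) * (z - w)))%C by (field; split; auto).
  rewrite Cmod_div by (repeat apply Cmult_neq_0; auto).
  rewrite !Cmod_mult; fold m; set (D := Cmod (u - z)) in *; set (M := Cmod (u - w)) in *.
  assert (HD : 0 <= D) by apply Cmod_ge_0.
  apply Rmult_le_reg_r with (M * m * m); [repeat apply Rmult_lt_0_compat; lra|].
  replace (D * D / (M * m * m) * (M * m * m)) with (D * D) by (field; split; lra).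
  apply Rle_trans with (D * (e * m * m * m / 2)); [apply Rmult_le_compat_l; lra|].
  replace (D * (e * m * m * m / 2)) with (e * D * (m / 2 * m * m)) by field.
  apply Rmult_le_compat_l; [apply Rmult_le_pos; lra|].
  apply Rmult_le_compat_r; [lra|]; apply Rmult_le_compat_r; lra.
Qed.

Lemma rect_int_Im f x1 x2 y1 y2 : Im (rect_int f x1 x2 y1 y2) =
  RInt (fun x => Im (f (x, y1))) x1 x2 + RInt (fun y => Re (f (x2, y))) y1 y2
  - RInt (fun x => Im (f (x, y2))) x1 x2 - RInt (fun y => Re (f (x1, y))) y1 y2.
Proof. unfold rect_int, CInt; cbn -[RInt]; ring. Qed.

Lemma Re_Cinv (z : C) : Re (/ z)%C = Re z / Cmod z ^ 2.
Proof. rewrite Cmod2_alt; reflexivity. Qed.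

Lemma Im_Cinv (z : C) : Im (/ z)%C = - Im z / Cmod z ^ 2.
Proof. rewrite Cmod2_alt; reflexivity. Qed.

Definition diff_quotient (g : C -> C) (w l : C) (u : C) : C :=
  if excluded_middle_informative (u = w) then l else ((g u - g w) / (u - w))%C.

Lemma diff_quotient_cont g w l : Cderive g w l -> Ccont (diff_quotient g w l) w.
Proof.
  intros Hl e He; destruct (Hl (e / 2)) as [d [Hd Hd']]; [lra|].
  exists d; split; auto; intros u Hu; unfold diff_quotient.
  destruct (excluded_middle_informative (w = w)) as [_|C]; [|congruence].
  destruct (excluded_middle_informative (u = w)) as [->|E]; [rewrite Cmod_sub_diag; auto|].
  assert (Huw := Cmod_sub_gt_0 _ _ E).
  replace ((g u - g w) / (u - w) - l)%C with ((g u - g w - l * (u - w)) / (u - w))%C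
    by (field; apply Cminus_eq_contra, E).
  rewrite Cmod_div by (apply Cminus_eq_contra, E).
  apply Rle_lt_trans with (e / 2); [|lra].
  apply Rmult_le_reg_r with (Cmod (u - w)); auto.
  unfold Rdiv at 1; rewrite Rmult_assoc, Rinv_l, Rmult_1_r by lra; auto.
Qed.

Lemma diff_quotient_diff g w l z : z <> w -> Cdiff g z -> Cdiff (diff_quotient g w l) z.
Proof.
  intros Hzw [lz Hlz]; eexists.
  apply (Cderive_local (fun u => (g u - g w) * / (u - w))%C _ _ _ (Cmod (z - w)));
    [apply Cmod_sub_gt_0, Hzw| |].
  - intros u Hu; unfold diff_quotient.
    destruct (excluded_middle_informative (u = w)) as [->|E]; [|reflexivity].
    rewrite Cmod_sub_sym in Hu; lra.
  - apply Cderive_mult; [apply Cderive_minus_const, Hlz | apply Cderive_inv_sub, Hzw].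
Qed.

Definition square_int (f : C -> C) (z0 : C) (s : R) : C :=
  rect_int f (Re z0 - s) (Re z0 + s) (Im z0 - s) (Im z0 + s).
Definition in_square (z0 : C) (s : R) : C -> Prop :=
  in_rect (Re z0 - s) (Re z0 + s) (Im z0 - s) (Im z0 + s).
Definition on_square (z0 : C) (s : R) : C -> Prop :=
  on_boundary (Re z0 - s) (Re z0 + s) (Im z0 - s) (Im z0 + s).

Section SquareLinearity.
Variables (z0 : C) (s : R).
Hypothesis Hs : 0 <= s.

Lemma square_int_ext f g : (forall z, on_square z0 s z -> f z = g z) ->
  square_int f z0 s = square_int g z0 s.
Proof. apply rect_int_ext; lra. Qed.

Lemma square_int_plus f g : Ccont_on (on_square z0 s) f -> Ccont_on (on_square z0 s) g ->
  square_int (fun z => f z + g z)%C z0 s = (square_int f z0 s + square_int g z0 s)%C.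
Proof. apply rect_int_plus; lra. Qed.

Lemma square_int_scal c f : Ccont_on (on_square z0 s) f ->
  square_int (fun z => c * f z)%C z0 s = (c * square_int f z0 s)%C.
Proof. apply rect_int_scal; lra. Qed.

Lemma square_int_minus f g : Ccont_on (on_square z0 s) f -> Ccont_on (on_square z0 s) g ->
  square_int (fun z => f z - g z)%C z0 s = (square_int f z0 s - square_int g z0 s)%C.
Proof. apply rect_int_minus; lra. Qed.

End SquareLinearity.

(* [2 pi i] in disguise: only [Im > 0] is needed, so that it is nonzero. *)
Definition winding (z0 : C) (s : R) (w : C) : C := square_int (fun u => / (u - w))%C z0 s.

Section Square.
Variables (z0 : C) (s : R).
Hypothesis Hs : 0 < s.

Lemma on_square_far z : on_square z0 s z -> s <= Cmod (z - z0).
Proof.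
  intros [[Hx Hy] H].
  assert (A := re_le_Cmod (z - z0)); assert (B := Cmod_Im_le (z - z0)).
  destruct z as [x y], z0 as [a b]; simpl in *.
  destruct H as [H|[H|[H|H]]]; subst;
    [rewrite Rabs_left in A | rewrite Rabs_right in A | rewrite Rabs_left in B | rewrite Rabs_right in B];
    lra.
Qed.

Lemma near_in_square w : Cmod (w - z0) < s ->
  Re z0 - s < Re w < Re z0 + s /\ Im z0 - s < Im w < Im z0 + s.
Proof.
  intros H; assert (A := re_le_Cmod (w - z0)); assert (B := Cmod_Im_le (w - z0)).
  destruct w as [x y], z0 as [a b]; simpl in *.
  destruct (Rabs_def2 (x + - a) s) as [A1 A2]; [lra|].
  destruct (Rabs_def2 (y + - b) s) as [B1 B2]; [lra|].
  lra.
Qed.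

Lemma on_square_dist z w : on_square z0 s z -> s - Cmod (w - z0) <= Cmod (z - w).
Proof.
  intros Hz; generalize (on_square_far z Hz) (Cmod_sub_triangle z w z0).
  rewrite (Cmod_sub_sym w z0); lra.
Qed.

Lemma on_square_neq z w : on_square z0 s z -> Cmod (w - z0) < s -> z <> w.
Proof.
  intros Hz Hw ->; generalize (on_square_dist w w Hz); rewrite Cmod_sub_diag; lra.
Qed.

Lemma Ccont_on_inv_sub w : Cmod (w - z0) < s -> Ccont_on (on_square z0 s) (fun u => / (u - w))%C.
Proof. intros Hw z Hz; apply Ccont_inv_sub, (on_square_neq z w Hz Hw). Qed.

Lemma winding_Im_pos w : Cmod (w - z0) < s -> 0 < Im (winding z0 s w).
Proof.
  intros Hw; destruct (near_in_square w Hw) as [[X1 X2] [Y1 Y2]].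
  set (x1 := Re z0 - s) in *; set (x2 := Re z0 + s) in *.
  set (y1 := Im z0 - s) in *; set (y2 := Im z0 + s) in *.
  destruct (Rcont_on_sides x1 x2 y1 y2 ltac:(lra) ltac:(lra) _ (Ccont_on_inv_sub w Hw))
    as (S1 & S2 & S3 & S4).
  assert (Hsq : forall x y, (x < Re w \/ Re w < x \/ y < Im w \/ Im w < y) ->
    0 < Cmod ((x, y) - w) ^ 2).
  { intros x y H; apply pow_lt, Cmod_sub_gt_0; intros E; subst w; simpl in H; lra. }
  destruct w as [w1 w2]; simpl in X1, X2, Y1, Y2.
  assert (P1 : 0 < RInt (fun x => Im (/ ((x, y1) - (w1, w2)))%C) x1 x2).
  { apply (RInt_component_pos Im Im_linear Cmod_Im_le); [lra | exact S1 | intros x _].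
    rewrite Im_Cinv; apply Rdiv_lt_0_compat; [simpl; lra | apply Hsq; simpl; lra]. }
  assert (P2 : 0 < RInt (fun y => Re (/ ((x2, y) - (w1, w2)))%C) y1 y2).
  { apply (RInt_component_pos Re Re_linear re_le_Cmod); [lra | exact S4 | intros y _].
    rewrite Re_Cinv; apply Rdiv_lt_0_compat; [simpl; lra | apply Hsq; simpl; lra]. }
  assert (P3 : RInt (fun x => Im (/ ((x, y2) - (w1, w2)))%C) x1 x2 < 0).
  { apply (RInt_component_neg Im Im_linear Cmod_Im_le); [lra | exact S2 | intros x _].
    rewrite Im_Cinv; apply Rdiv_neg_pos; [simpl; lra | apply Hsq; simpl; lra]. }
  assert (P4 : RInt (fun y => Re (/ ((x1, y) - (w1, w2)))%C) y1 y2 < 0).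
  { apply (RInt_component_neg Re Re_linear re_le_Cmod); [lra | exact S3 | intros y _].
    rewrite Re_Cinv; apply Rdiv_neg_pos; [simpl; lra | apply Hsq; simpl; lra]. }
  unfold winding, square_int; rewrite rect_int_Im; fold x1 x2 y1 y2; lra.
Qed.

Variable g : C -> C.
Hypothesis Hg : forall z, in_square z0 s z -> Cdiff g z.

Lemma Ccont_on_square : Ccont_on (on_square z0 s) g.
Proof. intros z [Hz _]; apply Cdiff_Ccont, Hg, Hz. Qed.

(* Goursat's lemma for the difference quotient, whose only non-holomorphic point is [w]. *)
Lemma cauchy_square w : Cmod (w - z0) < s ->
  square_int (fun u => g u * / (u - w))%C z0 s = (g w * winding z0 s w)%C.
Proof.
  intros Hw; destruct (near_in_square w Hw) as [Wx Wy].
  destruct (Hg w ltac:(split; lra)) as [l Hl].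
  assert (Hq : square_int (diff_quotient g w l) z0 s = RtoC 0).
  { apply (goursat_except _ _ _ _ _ w Wx Wy (diff_quotient_cont g w l Hl)).
    intros z Hz Hzw; apply diff_quotient_diff; auto. }
  assert (Hinv := Ccont_on_inv_sub w Hw).
  assert (E : square_int (diff_quotient g w l) z0 s =
    (square_int (fun u => g u * / (u - w))%C z0 s - g w * winding z0 s w)%C).
  { rewrite (square_int_ext z0 s ltac:(lra) _ (fun u => g u * / (u - w) - g w * / (u - w))%C).
    - rewrite square_int_minus, square_int_scal; try lra;
        auto using Ccont_on_mult, Ccont_on_scal, Ccont_on_square.
    - intros u Hu; unfold diff_quotient.
      destruct (excluded_middle_informative (u = w)) as [E|E].
      + contradiction (on_square_neq u w Hu Hw).
      + field; apply Cminus_eq_contra, E. }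
  apply Ceq_minus; rewrite <- E; exact Hq.
Qed.

End Square.

(** * Power series expansion and isolated zeros *)

Lemma le_0_of_le_geometric x K q : 0 <= q < 1 -> (forall N, x <= K * q ^ N) -> x <= 0.
Proof.
  intros Hq H; apply Rle_plus_epsilon; intros e He.
  destruct (pow_lt_1_zero q ltac:(rewrite Rabs_pos_eq; lra) (e / (Rabs K + 1))) as [N HN];
    [apply Rdiv_lt_0_compat; generalize (Rabs_pos K); lra|].
  specialize (HN N (le_n N)); rewrite Rabs_pos_eq in HN by (apply pow_le; lra).
  assert (HqN : 0 <= q ^ N) by (apply pow_le; lra).
  apply Rle_trans with (K * q ^ N); [apply H|].
  apply Rle_trans with ((Rabs K + 1) * q ^ N); [generalize (Rle_abs K); nra|].
  apply Rle_trans with ((Rabs K + 1) * (e / (Rabs K + 1))).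
  - apply Rmult_le_compat_l; generalize (Rabs_pos K); lra.
  - right; field; generalize (Rabs_pos K); lra.
Qed.

Fixpoint Csum (F : nat -> C) (n : nat) : C :=
  match n with O => RtoC 0 | S n => (Csum F n + F n)%C end.

Lemma Csum_mult_l c F n : (c * Csum F n)%C = Csum (fun m => c * F m)%C n.
Proof. induction n as [|n IH]; simpl; [ring | rewrite <- IH; ring]. Qed.

Lemma Csum_zero F n : (forall m, (m < n)%nat -> F m = RtoC 0) -> Csum F n = RtoC 0.
Proof. induction n as [|n IH]; simpl; intros H; auto; rewrite IH, H; auto; ring. Qed.

Lemma Cinv_sub_geometric (a b : C) N : a <> RtoC 0 -> (a - b)%C <> RtoC 0 ->
  (/ (a - b))%C = (Csum (fun m => b ^ m * / a ^ (S m)) N + (b * / a) ^ N * / (a - b))%C.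
Proof.
  intros Ha Hab; induction N as [|N IH]; [simpl; field; auto|].
  rewrite IH at 1; simpl Csum; rewrite !Cpow_S, !Cpow_mult_l, !Cpow_inv by auto.
  assert (HaN : (a ^ N)%C <> RtoC 0) by (apply Cpow_nz; auto).
  field; repeat split; auto.
Qed.

Lemma ex_least_nat (P : nat -> Prop) : (exists n, P n) ->
  exists n, P n /\ forall m, (m < n)%nat -> ~ P m.
Proof.
  intros [n Hn]; induction n as [n IH] using (well_founded_induction Wf_nat.lt_wf).
  destruct (classic (exists m, (m < n)%nat /\ P m)) as [[m [Hm Pm]]|H].
  - apply (IH m Hm Pm).
  - exists n; split; auto; intros m Hm Pm; apply H; eauto.
Qed.

Section Expansion.
Variables (z0 : C) (s : R).
Hypothesis Hs : 0 < s.
Variable g : C -> C.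
Hypothesis Hg : forall z, in_square z0 s z -> Cdiff g z.
Variable G : R.
Hypothesis HG : forall z, in_square z0 s z -> Cmod (g z) <= G.

(* [2 pi i] times the [m]-th Taylor coefficient of [g] at [z0]. *)
Definition taylor_coeff (m : nat) : C := square_int (fun u => g u * / (u - z0) ^ (S m))%C z0 s.

Definition taylor_remainder (w : C) (N : nat) : C :=
  square_int (fun u => g u * ((w - z0) * / (u - z0)) ^ N * / (u - w))%C z0 s.

Lemma on_square_neq_center u : on_square z0 s u -> u <> z0.
Proof. intros H ->; generalize (on_square_far z0 s Hs z0 H); rewrite Cmod_sub_diag; lra. Qed.

Lemma Ccont_on_taylor_kernel m : Ccont_on (on_square z0 s) (fun u => / (u - z0) ^ m)%C.
Proof.
  intros u Hu; apply Ccont_inv; [apply Ccont_pow, Ccont_minus; [apply Ccont_id | apply Ccont_const]|].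
  apply Cpow_nz, Cminus_eq_contra, on_square_neq_center, Hu.
Qed.

Lemma Ccont_on_remainder_kernel w N : Cmod (w - z0) < s ->
  Ccont_on (on_square z0 s) (fun u => g u * ((w - z0) * / (u - z0)) ^ N * / (u - w))%C.
Proof.
  intros Hw; apply Ccont_on_mult; [apply Ccont_on_mult|]; auto using Ccont_on_square, Ccont_on_inv_sub.
  intros u Hu; apply Ccont_pow, Ccont_mult; [apply Ccont_const|].
  apply Ccont_inv_sub, on_square_neq_center, Hu.
Qed.

Lemma square_int_Csum (F : nat -> C -> C) (Rm : C -> C) N :
  (forall m, Ccont_on (on_square z0 s) (F m)) -> Ccont_on (on_square z0 s) Rm ->
  square_int (fun u => Csum (fun m => F m u) N + Rm u)%C z0 s =
  (Csum (fun m => square_int (F m) z0 s) N + square_int Rm z0 s)%C.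
Proof.
  intros HF; revert Rm; induction N as [|N IH]; intros Rm HR; simpl.
  - rewrite (square_int_ext z0 s ltac:(lra) _ Rm) by (intros; ring); ring.
  - rewrite (square_int_ext z0 s ltac:(lra) _
      (fun u => Csum (fun m => F m u) N + (F N u + Rm u))%C) by (intros; ring).
    rewrite IH, square_int_plus by (auto using Ccont_on_plus; lra); ring.
Qed.

Lemma cauchy_expansion w N : Cmod (w - z0) < s ->
  (g w * winding z0 s w)%C = (Csum (fun m => (w - z0) ^ m * taylor_coeff m) N + taylor_remainder w N)%C.
Proof.
  intros Hw; rewrite <- (cauchy_square z0 s Hs g Hg w Hw).
  assert (Hkernel : forall m, Ccont_on (on_square z0 s) (fun u => g u * / (u - z0) ^ S m)%C)
    by (intros m; apply Ccont_on_mult; auto using Ccont_on_square, Ccont_on_taylor_kernel).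
  rewrite (square_int_ext z0 s ltac:(lra) _ (fun u =>
    Csum (fun m => (w - z0) ^ m * (g u * / (u - z0) ^ (S m))) N +
    g u * ((w - z0) * / (u - z0)) ^ N * / (u - w))%C).
  - rewrite square_int_Csum by auto using Ccont_on_scal, Ccont_on_remainder_kernel.
    f_equal; f_equal; apply functional_extensionality; intros m.
    unfold taylor_coeff; apply square_int_scal; auto; lra.
  - intros u Hu.
    assert (A := Cminus_eq_contra _ _ (on_square_neq_center u Hu)).
    assert (B : (u - z0 - (w - z0))%C <> RtoC 0).
    { replace (u - z0 - (w - z0))%C with (u - w)%C by ring.
      apply Cminus_eq_contra, (on_square_neq z0 s Hs u w Hu Hw). }
    assert (GI := Cinv_sub_geometric (u - z0) (w - z0) N A B).
    replace (u - z0 - (w - z0))%C with (u - w)%C in GI by ring.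
    rewrite GI at 1; rewrite Cmult_plus_distr_l, Csum_mult_l; f_equal.
    + f_equal; apply functional_extensionality; intros m; ring.
    + ring.
Qed.

Lemma taylor_remainder_bound w N : Cmod (w - z0) < s / 2 ->
  Cmod (taylor_remainder w N) <= 16 * G * (Cmod (w - z0) / s) ^ N.
Proof.
  intros Hw; set (b := Cmod (w - z0)) in *; assert (Hb : 0 <= b) by apply Cmod_ge_0.
  assert (Hbs : 0 <= b / s) by (apply Rmult_le_pos; [|apply Rlt_le, Rinv_0_lt_compat]; lra).
  assert (HG0 : 0 <= G) by (apply Rle_trans with (Cmod (g z0)); [apply Cmod_ge_0 | apply HG; repeat split; lra]).
  unfold taylor_remainder, square_int.
  eapply Rle_trans; [apply (rect_int_norm (Re z0 - s) (Re z0 + s) (Im z0 - s) (Im z0 + s) ltac:(lra) ltac:(lra)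
    _ (G * (b / s) ^ N * (2 / s)))|].
  - apply Ccont_on_remainder_kernel; fold b; lra.
  - intros u Hu.
    assert (Hfar := on_square_far z0 s Hs u Hu).
    assert (Hdist := on_square_dist z0 s Hs u w Hu); fold b in Hdist.
    assert (Huz := Cminus_eq_contra _ _ (on_square_neq_center u Hu)).
    assert (Huw := Cminus_eq_contra _ _ (on_square_neq z0 s Hs u w Hu ltac:(fold b; lra))).
    rewrite !Cmod_mult, Cmod_pow, Cmod_mult, !Cmod_inv by auto; fold b.
    apply Rmult_le_compat; [apply Rmult_le_pos; [apply Cmod_ge_0 | apply pow_le] | | |].
    + apply Rmult_le_pos; [auto | apply Rlt_le, Rinv_0_lt_compat; lra].
    + apply Rlt_le, Rinv_0_lt_compat; lra.
    + apply Rmult_le_compat; [apply Cmod_ge_0 | apply pow_le | apply HG, Hu |].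
      * apply Rmult_le_pos; [auto | apply Rlt_le, Rinv_0_lt_compat; lra].
      * apply pow_incr; split; [apply Rmult_le_pos; [auto | apply Rlt_le, Rinv_0_lt_compat; lra]|].
        apply Rmult_le_compat_l; auto; apply Rinv_le_contravar; lra.
    + apply Rle_trans with (/ (s - b)); [apply Rinv_le_contravar; lra | unfold Rdiv; apply Rmult_le_reg_r with ((s - b) * s); [nra | field_simplify; lra]].
  - right; field; lra.
Qed.

Lemma winding_neq_0 w : Cmod (w - z0) < s -> winding z0 s w <> RtoC 0.
Proof. intros Hw E; generalize (winding_Im_pos z0 s Hs w Hw); rewrite E; simpl; lra. Qed.

Lemma taylor_coeffs_zero : (forall m, taylor_coeff m = RtoC 0) ->
  forall w, Cmod (w - z0) < s / 2 -> g w = RtoC 0.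
Proof.
  intros Hall w Hw; set (b := Cmod (w - z0)) in *; assert (Hb : 0 <= b) by apply Cmod_ge_0.
  assert (Hprod : Cmod (g w * winding z0 s w) <= 0).
  { apply (le_0_of_le_geometric _ (16 * G) (b / s)).
    - split; [apply Rmult_le_pos; [|apply Rlt_le, Rinv_0_lt_compat]; lra|].
      apply Rmult_lt_reg_r with s; auto; unfold Rdiv; rewrite Rmult_assoc, Rinv_l; lra.
    - intros N; rewrite (cauchy_expansion w N) by (fold b; lra).
      rewrite Csum_zero by (intros m _; rewrite Hall; ring).
      rewrite Cplus_0_l; apply taylor_remainder_bound; auto. }
  apply NNPP; intros Hgw; apply (Cmult_neq_0 _ _ Hgw (winding_neq_0 w ltac:(fold b; lra))).
  apply Cmod_eq_0, Rle_antisym; auto; apply Cmod_ge_0.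
Qed.

(* [g(w) = 0] would force [|w - z0|^m0 |a_m0| <= 16 G |w - z0|^(m0+1) / s^(m0+1)]. *)
Lemma taylor_first_nonzero m0 : taylor_coeff m0 <> RtoC 0 ->
  (forall m, (m < m0)%nat -> taylor_coeff m = RtoC 0) ->
  exists r, 0 < r /\ forall w, 0 < Cmod (w - z0) < r -> g w <> RtoC 0.
Proof.
  intros Hm0 Hlt; set (c := Cmod (taylor_coeff m0)).
  assert (Hc : 0 < c) by (apply Cmod_gt_0; auto).
  assert (Hsp : 0 < s ^ S m0) by (apply pow_lt; lra).
  assert (HG0 : 0 <= G) by (apply Rle_trans with (Cmod (g z0)); [apply Cmod_ge_0 | apply HG; repeat split; lra]).
  exists (Rmin (s / 2) (c * s ^ S m0 / (16 * G + 1))); split.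
  { apply Rmin_pos; [lra | apply Rdiv_lt_0_compat; [apply Rmult_lt_0_compat|]; lra]. }
  intros w [Hw1 Hw2] Hgw.
  assert (Hw : Cmod (w - z0) < s / 2 /\ Cmod (w - z0) < c * s ^ S m0 / (16 * G + 1)) by (Rmin_bounds; lra).
  set (b := Cmod (w - z0)) in *; destruct Hw as [Hwa Hwb].
  assert (E := cauchy_expansion w (S m0) ltac:(fold b; lra)); rewrite Hgw in E; simpl Csum in E.
  rewrite Csum_zero in E by (intros m Hm; rewrite Hlt by auto; ring).
  assert (E' : ((w - z0) ^ m0 * taylor_coeff m0)%C = (- taylor_remainder w (S m0))%C).
  { transitivity (RtoC 0 * winding z0 s w - taylor_remainder w (S m0))%C; [rewrite E|]; ring. }
  apply (f_equal Cmod) in E'; rewrite Cmod_opp, Cmod_mult, Cmod_pow in E'; fold b c in E'.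
  assert (HR := taylor_remainder_bound w (S m0) Hwa); fold b in HR; rewrite <- E' in HR.
  assert (Hbm : 0 < b ^ m0) by (apply pow_lt; auto).
  replace (16 * G * (b / s) ^ S m0) with (b ^ m0 * (16 * G * b / s ^ S m0)) in HR
    by (unfold Rdiv; rewrite Rpow_mult_distr, pow_inv; simpl; field; split; [apply pow_nonzero|]; lra).
  apply Rmult_le_reg_l in HR; auto.
  assert (16 * G * b / s ^ S m0 < c); [|lra].
  apply Rmult_lt_reg_r with (s ^ S m0); auto; unfold Rdiv; rewrite Rmult_assoc, Rinv_l, Rmult_1_r by lra.
  apply Rle_lt_trans with ((16 * G + 1) * b); [nra|].
  apply Rmult_lt_reg_r with (/ (16 * G + 1)); [apply Rinv_0_lt_compat; lra|].
  replace ((16 * G + 1) * b * / (16 * G + 1)) with b by (field; lra).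
  unfold Rdiv in Hwb; lra.
Qed.

End Expansion.

Lemma zeros_dichotomy z0 s g G : 0 < s ->
  (forall z, in_square z0 s z -> Cdiff g z) -> (forall z, in_square z0 s z -> Cmod (g z) <= G) ->
  (forall w, Cmod (w - z0) < s / 2 -> g w = RtoC 0) \/
  (exists r, 0 < r /\ forall w, 0 < Cmod (w - z0) < r -> g w <> RtoC 0).
Proof.
  intros Hs Hg HG.
  destruct (classic (forall m, taylor_coeff z0 s g m = RtoC 0)) as [Hall|Hnot].
  - left; apply (taylor_coeffs_zero z0 s Hs g Hg G HG Hall).
  - right; apply not_all_ex_not, ex_least_nat in Hnot; destruct Hnot as (m0 & Hm0 & Hlt).
    apply (taylor_first_nonzero z0 s Hs g Hg G HG m0 Hm0).
    intros m Hm; apply NNPP, Hlt, Hm.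
Qed.

(** * The identity theorem on the strip *)

Lemma ex_derive_Cdiff (f : C -> C) (z : C) :
  @ex_derive C_AbsRing C_NormedModule f z -> Cdiff f z.
Proof.
  intros [l [_ Hd]]; exists l; intros e He.
  destruct (Hd z (fun P H => H) (mkposreal e He)) as [d Hd']; simpl in Hd'.
  exists d; split; [apply cond_pos|]; intros u Hu.
  replace (l * (u - z))%C with ((u - z) * l)%C by ring; exact (Hd' u Hu).
Qed.

Lemma real_induction (P : R -> Prop) : P 0 ->
  (forall t, 0 <= t < 1 -> P t -> exists e, 0 < e /\ forall u, t <= u <= t + e -> P u) ->
  (forall t, 0 < t <= 1 -> (forall u, 0 <= u < t -> P u) -> P t) ->
  P 1.
Proof.
  intros H0 Hopen Hclosed.
  set (A := fun t => 0 <= t <= 1 /\ forall u, 0 <= u <= t -> P u).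
  destruct (completeness A) as [tau [Hub Hlub]].
  - exists 1; intros t [Ht _]; lra.
  - exists 0; split; [lra|]; intros u Hu; replace u with 0 by lra; auto.
  - assert (Ht0 : 0 <= tau) by (apply Hub; split; [lra|]; intros u Hu; replace u with 0 by lra; auto).
    assert (Ht1 : tau <= 1) by (apply Hlub; intros t [Ht _]; lra).
    assert (Hbelow : forall u, 0 <= u < tau -> P u).
    { intros u Hu; apply NNPP; intros Hn.
      assert (tau <= u); [|lra].
      apply Hlub; intros t [Ht Ht']; apply Rnot_lt_le; intros Hut; apply Hn, Ht'; lra. }
    assert (Htau : P tau).
    { destruct (Req_dec tau 0) as [->|Hne]; auto; apply Hclosed; auto; lra. }
    destruct (Rle_lt_or_eq_dec tau 1 Ht1) as [Hlt|<-]; auto.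
    destruct (Hopen tau ltac:(lra) Htau) as [e [He Hu]].
    assert (Hm : 0 < Rmin e (1 - tau)) by (apply Rmin_pos; lra).
    assert (A (tau + Rmin e (1 - tau))).
    { split; [Rmin_bounds; split; lra|]; intros u Hu'.
      destruct (Rlt_le_dec u tau); [apply Hbelow; lra | apply Hu; Rmin_bounds; split; lra]. }
    assert (tau + Rmin e (1 - tau) <= tau) by (apply Hub; auto); lra.
Qed.

Section Strip.
Variables (rho : R) (v : C -> C).
Hypothesis Han : analytic_on_strip rho v.
Variable M : R.
Hypothesis HM : forall z, strip rho z -> Cmod (v z) <= M.

Lemma strip_Cdiff z : strip rho z -> Cdiff v z.
Proof. intros H; apply ex_derive_Cdiff, Han, H. Qed.

Lemma strip_Ccont z : strip rho z -> Ccont v z.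
Proof. intros H; apply Cdiff_Ccont, strip_Cdiff, H. Qed.

Lemma strip_dichotomy (c : C) z : strip rho z ->
  (exists r, 0 < r /\ forall w, Cmod (w - z) < r -> v w = c) \/
  (exists r, 0 < r /\ forall w, 0 < Cmod (w - z) < r -> v w <> c).
Proof.
  intros Hz; unfold strip in Hz.
  set (s := (rho - Rabs (Im z)) / 2); assert (Hs : 0 < s) by (unfold s; lra).
  assert (Hsq : forall u, in_square z s u -> strip rho u).
  { intros u [_ Hu]; unfold strip; generalize (Rabs_le_between (Im z) (Rabs (Im z))); intros [H _].
    destruct (H (Rle_refl _)); apply Rabs_def1; unfold s in Hu; lra. }
  destruct (zeros_dichotomy z s (fun u => v u - c)%C (M + Cmod c)) as [H|[r [Hr H]]]; auto.
  - intros u Hu; destruct (strip_Cdiff u (Hsq u Hu)) as [l Hl]; exists l; apply Cderive_minus_const, Hl.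
  - intros u Hu; generalize (HM u (Hsq u Hu)) (Cmod_triangle (v u) (- c)); rewrite Cmod_opp.
    replace (v u + - c)%C with (v u - c)%C by ring; lra.
  - left; exists (s / 2); split; [lra|]; intros w Hw; apply Ceq_minus, H, Hw.
  - right; exists r; split; auto; intros w Hw E; apply (H w Hw); rewrite E; ring.
Qed.

Lemma strip_segment z0 p t : strip rho z0 -> strip rho p -> 0 <= t <= 1 ->
  strip rho (z0 + RtoC t * (p - z0))%C.
Proof.
  unfold strip; destruct z0 as [a1 a2], p as [b1 b2]; simpl; intros H1 H2 Ht.
  replace (a2 + (t * (b2 + - a2) + 0 * (b1 + - a1))) with ((1 - t) * a2 + t * b2) by ring.
  eapply Rle_lt_trans; [apply Rabs_triang|].
  rewrite !Rabs_mult, (Rabs_pos_eq (1 - t)), (Rabs_pos_eq t) by lra.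
  destruct (Rle_lt_or_eq_dec 0 t (proj1 Ht)) as [Hp|<-]; [|lra].
  assert ((1 - t) * Rabs a2 <= (1 - t) * rho) by (apply Rmult_le_compat_l; lra).
  assert (t * Rabs b2 < t * rho) by (apply Rmult_lt_compat_l; lra); lra.
Qed.

(* Along the segment from [z0] to [p], "[v = c] near the point" propagates by real induction;
   the alternative of the dichotomy is excluded by the points just before. *)
Lemma level_set_propagation (c : C) z0 s0 : strip rho z0 -> 0 < s0 ->
  (forall w, Cmod (w - z0) < s0 -> v w = c) -> forall p, strip rho p -> v p = c.
Proof.
  intros Hz0 Hs0 Hball p Hp.
  destruct (classic (p = z0)) as [->|Hpz]; [apply Hball; rewrite Cmod_sub_diag; auto|].
  set (L := Cmod (p - z0)); assert (HL : 0 < L) by (apply Cmod_sub_gt_0, Hpz).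
  set (gam := fun t => (z0 + RtoC t * (p - z0))%C).
  assert (Hdist : forall t u, Cmod (gam t - gam u) = Rabs (t - u) * L).
  { intros t u; unfold gam.
    replace (z0 + RtoC t * (p - z0) - (z0 + RtoC u * (p - z0)))%C with (RtoC (t - u) * (p - z0))%C
      by (unfold RtoC; apply injective_projections; destruct z0, p; simpl; ring).
    rewrite Cmod_mult, Cmod_R; reflexivity. }
  assert (Hgam0 : gam 0 = z0) by (unfold gam; ring).
  assert (Hgam1 : gam 1 = p) by (unfold gam; ring).
  set (P := fun t => exists r, 0 < r /\ forall w, Cmod (w - gam t) < r -> v w = c).
  assert (HP1 : P 1).
  { apply real_induction.
    - exists s0; split; auto; rewrite Hgam0; exact Hball.
    - intros t Ht [r [Hr H]]; exists (r / (2 * L)); split; [apply Rdiv_lt_0_compat; lra|].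
      intros u Hu; exists (r / 2); split; [lra|]; intros w Hw; apply H.
      eapply Rle_lt_trans; [apply (Cmod_sub_triangle w (gam u) (gam t))|]; rewrite Hdist.
      assert (Rabs (u - t) * L <= r / (2 * L) * L)
        by (apply Rmult_le_compat_r; [lra | rewrite Rabs_pos_eq; lra]).
      replace (r / (2 * L) * L) with (r / 2) in * by (field; lra); lra.
    - intros t Ht Hbefore.
      destruct (strip_dichotomy c (gam t) (strip_segment z0 p t Hz0 Hp ltac:(lra)))
        as [Hnear|[r [Hr Hiso]]]; auto; exfalso.
      set (u := t - Rmin t (r / (2 * L)) / 2).
      assert (Hm : 0 < Rmin t (r / (2 * L))) by (apply Rmin_pos; [lra | apply Rdiv_lt_0_compat; lra]).
      assert (Hu : 0 <= u < t) by (unfold u; Rmin_bounds; lra).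
      destruct (Hbefore u Hu) as [r' [Hr' Hu']].
      apply (Hiso (gam u)); [|apply Hu'; rewrite Cmod_sub_diag; auto].
      rewrite Hdist, Rabs_left by lra; split; [apply Rmult_lt_0_compat; lra|].
      apply Rle_lt_trans with (r / (2 * L) / 2 * L).
      + apply Rmult_le_compat_r; unfold u; Rmin_bounds; lra.
      + replace (r / (2 * L) / 2 * L) with (r / 4) by (field; lra); lra. }
  destruct HP1 as [r [Hr H]]; apply H; rewrite Hgam1, Cmod_sub_diag; auto.
Qed.

Hypothesis Hnc : nonconstant_on_strip rho v.

Lemma level_points_isolated (c : C) z : strip rho z ->
  exists r, 0 < r /\ forall w, 0 < Cmod (w - z) < r -> v w <> c.
Proof.
  intros Hz; destruct (strip_dichotomy c z Hz) as [[s [Hs H]]|H]; auto; exfalso.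
  destruct Hnc as (z1 & z2 & H1 & H2 & H3); apply H3.
  rewrite (level_set_propagation c z s Hz Hs H z1 H1), (level_set_propagation c z s Hz Hs H z2 H2).
  reflexivity.
Qed.

End Strip.

(** * Avoiding finitely many levels *)

Lemma lebesgue_number (a b : R) (P : R -> R -> Prop) :
  (forall t, a <= t <= b -> exists r, 0 < r /\ P t r) ->
  exists d, 0 < d /\ forall x, a <= x <= b ->
    exists t r, a <= t <= b /\ P t r /\ Rabs (x - t) < r /\ d <= r.
Proof.
  intros H.
  assert (F : forall t, {r : R | 0 < r /\ (a <= t <= b -> P t r)}).
  { intros t; apply constructive_indefinite_description.
    destruct (classic (a <= t <= b)) as [Ht|Ht].
    - destruct (H t Ht) as [r [Hr Hp]]; exists r; auto.
    - exists 1; split; [lra | intros; contradiction]. }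
  destruct (compactness_value_1d a b (fun t => mkposreal _ (proj1 (proj2_sig (F t))))) as [d Hd].
  exists d; split; [apply cond_pos|]; intros x Hx.
  apply NNPP; intros Hn; apply (Hd x Hx); intros (t & Ht & H1 & H2).
  apply Hn; exists t, (proj1_sig (F t)).
  split; [exact Ht | split; [apply (proj2 (proj2_sig (F t))), Ht | split; assumption]].
Qed.

Lemma Cmod_sub_pair (x y t a : R) : Cmod ((x, y) - (t, a))%C <= Rabs (x - t) + Rabs (y - a).
Proof. apply (Cmod_le_Re_Im ((x, y) - (t, a))). Qed.

Section Levels.
Variables (rho : R) (v : C -> C).
Hypothesis Han : analytic_on_strip rho v.
Variable M : R.
Hypothesis HM : forall z, strip rho z -> Cmod (v z) <= M.
Hypothesis Hnc : nonconstant_on_strip rho v.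

(* Slightly above the height [a], the isolated points of [v = c] near the segment
   [[0,1] + i a] are all missed. *)
Lemma avoiding_height (c : C) a b : a < b -> Rabs a < rho ->
  exists y, a <= y <= b /\ forall x, 0 <= x <= 1 -> v (x, y) <> c.
Proof.
  intros Hab Ha.
  destruct (lebesgue_number 0 1 (fun t r => forall w, 0 < Cmod (w - (t, a)) < 2 * r -> v w <> c))
    as [d [Hd Hleb]].
  { intros t _; destruct (level_points_isolated rho v Han M HM Hnc c (t, a) Ha) as [r [Hr H]].
    exists (r / 2); split; [lra|]; intros w Hw; apply H; lra. }
  exists (a + Rmin d (b - a) / 2); split.
  { assert (0 < Rmin d (b - a)) by (apply Rmin_pos; lra); Rmin_bounds; split; lra. }
  intros x Hx; destruct (Hleb x Hx) as (t & r & Ht & Hr & Hxt & Hdr).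
  assert (Hm : 0 < Rmin d (b - a)) by (apply Rmin_pos; lra).
  apply Hr; split.
  - eapply Rlt_le_trans; [|apply Cmod_Im_le]; simpl; rewrite Rabs_pos_eq; lra.
  - eapply Rle_lt_trans; [apply Cmod_sub_pair|].
    rewrite (Rabs_pos_eq (_ - a)) by lra; Rmin_bounds; lra.
Qed.

Lemma avoidance_margin (c : C) y0 : Rabs y0 < rho -> (forall x, 0 <= x <= 1 -> v (x, y0) <> c) ->
  exists e, 0 < e /\ forall x y, 0 <= x <= 1 -> Rabs (y - y0) <= e -> e <= Cmod (v (x, y) - c).
Proof.
  intros Hy0 Hne.
  destruct (lebesgue_number 0 1 (fun t r => forall u, Cmod (u - (t, y0)) < 2 * r -> 2 * r < Cmod (v u - c)))
    as [d [Hd Hleb]].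
  { intros t Ht; set (e := Cmod (v (t, y0) - c) / 2).
    assert (He : 0 < e) by (apply Rdiv_lt_0_compat; [apply Cmod_sub_gt_0, Hne, Ht | lra]).
    destruct (strip_Ccont rho v Han (t, y0) Hy0 e He) as [d1 [Hd1 H1]].
    exists (Rmin d1 e / 2); split; [generalize (Rmin_pos d1 e Hd1 He); lra|].
    intros u Hu; assert (Hu1 : Cmod (u - (t, y0)) < d1) by (Rmin_bounds; lra).
    generalize (H1 u Hu1) (Cmod_sub_triangle (v (t, y0)) (v u) c).
    rewrite (Cmod_sub_sym (v (t, y0)) (v u)); unfold e in *; Rmin_bounds; lra. }
  exists (d / 2); split; [lra|]; intros x y Hx Hy.
  destruct (Hleb x Hx) as (t & r & Ht & Hr & Hxt & Hdr).
  apply Rlt_le, Rle_lt_trans with (2 * r); [lra|]; apply Hr.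
  eapply Rle_lt_trans; [apply Cmod_sub_pair|]; lra.
Qed.

(* Levels [|c| > |M| + 1] are avoided everywhere; the others are handled by compactness in [c]. *)
Lemma uniform_avoidance_band a b : a < b -> - rho < a -> b < rho ->
  exists l, 0 < l /\ exists e, 0 < e /\ forall c : R, exists a', a <= a' /\ a' + l <= b /\
    forall y x, a' <= y <= a' + l -> 0 <= x <= 1 -> e <= Cmod (v (x, y) - RtoC c).
Proof.
  intros Hab Ha Hb.
  assert (Hstrip : forall x y, a <= y <= b -> strip rho (x, y))
    by (intros x y Hy; unfold strip; simpl; apply Rabs_def1; lra).
  set (K := Rabs M + 1).
  destruct (lebesgue_number (- K) K (fun t l => exists a', a <= a' /\ a' + l <= b /\
    forall y x, a' <= y <= a' + l -> 0 <= x <= 1 -> 2 * l <= Cmod (v (x, y) - RtoC t)))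
    as [d [Hd Hleb]].
  { intros t _.
    destruct (avoiding_height (RtoC t) a b Hab ltac:(apply Rabs_def1; lra)) as [yt [Hyt Hgood]].
    destruct (avoidance_margin (RtoC t) yt ltac:(apply Rabs_def1; lra) Hgood) as [et [Het Hu]].
    set (l := Rmin (et / 2) ((b - a) / 2)); assert (Hl : 0 < l) by (apply Rmin_pos; lra).
    assert (Hl' : l <= et / 2 /\ l <= (b - a) / 2) by (unfold l; Rmin_bounds; lra).
    exists l; split; auto.
    exists (if Rle_dec a (yt - l) then yt - l else yt); destruct (Rle_dec a (yt - l));
      (split; [lra | split; [lra|]]); intros y x Hy Hx;
      (apply Rle_trans with et; [lra | apply Hu; auto; apply Rabs_le; lra]). }
  exists (Rmin d (b - a)); split; [apply Rmin_pos; lra|].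
  exists (Rmin d 1); split; [apply Rmin_pos; lra|].
  intros c; destruct (Rle_dec (Rabs c) K) as [Hc|Hc].
  - destruct (Hleb c (proj1 (Rabs_le_between c K) Hc)) as (t & l & Ht & (a' & Ha' & Hb' & Hband) & Hct & Hdl).
    exists a'; split; [auto | split; [Rmin_bounds; lra|]]; intros y x Hy Hx.
    assert (Hy' : a' <= y <= a' + l) by (Rmin_bounds; lra).
    generalize (Hband y x Hy' Hx) (Cmod_sub_triangle (v (x, y)) (RtoC c) (RtoC t)).
    rewrite <- RtoC_minus, Cmod_R; Rmin_bounds; lra.
  - exists a; split; [lra | split; [Rmin_bounds; lra|]]; intros y x Hy Hx.
    assert (Hv := HM (x, y) (Hstrip x y ltac:(Rmin_bounds; lra))).
    generalize (Cmod_sub_rev (RtoC c) (v (x, y)) ); rewrite Cmod_R, (Cmod_sub_sym (RtoC c)).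
    generalize (Rle_abs M); unfold K in Hc; Rmin_bounds; lra.
Qed.

Variable dlt : R.
Hypothesis Hdlt : 0 < dlt < rho.

Definition levels_avoidable (k : nat) : Prop :=
  forall a b, dlt / 2 <= a -> a < b -> b <= dlt ->
  exists eps, 0 < eps /\ forall E : nat -> R, exists y, a <= y <= b /\
    forall j, (j < k)%nat -> forall x, 0 <= x <= 1 -> eps <= Cmod (v (x, y) - RtoC (E j)).

Lemma levels_avoidable_uniform k : levels_avoidable k -> forall l, 0 < l ->
  exists eps, 0 < eps /\ forall a, dlt / 2 <= a -> a + l <= dlt -> forall E : nat -> R,
    exists y, a <= y <= a + l /\
      forall j, (j < k)%nat -> forall x, 0 <= x <= 1 -> eps <= Cmod (v (x, y) - RtoC (E j)).
Proof.
  intros HQ l Hl.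
  destruct (lebesgue_number (dlt / 2) (dlt - l) (fun a0 r => r <= l / 4 /\ forall E : nat -> R,
    exists y, a0 + l / 4 <= y <= a0 + 3 * l / 4 /\
      forall j, (j < k)%nat -> forall x, 0 <= x <= 1 -> r <= Cmod (v (x, y) - RtoC (E j))))
    as [d [Hd Hleb]].
  { intros a0 Ha0; destruct (HQ (a0 + l / 4) (a0 + 3 * l / 4)) as [e [He H]]; try lra.
    exists (Rmin e (l / 4)); split; [apply Rmin_pos; lra|]; split; [Rmin_bounds; lra|].
    intros E; destruct (H E) as [y [Hy Hj]]; exists y; split; auto.
    intros j Hjk x Hx; generalize (Hj j Hjk x Hx); Rmin_bounds; lra. }
  exists d; split; auto; intros a Ha1 Ha2 E.
  destruct (Hleb a ltac:(lra)) as (a0 & r & Ha0 & [Hrl HP] & Haa0 & Hdr).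
  destruct (HP E) as [y [Hy Hj]]; apply Rabs_def2 in Haa0.
  exists y; split; [lra|]; intros j Hjk x Hx; generalize (Hj j Hjk x Hx); lra.
Qed.

(* Inductive step: the new level [E k] leaves a band of uniform length [l] free, inside
   which the remaining levels are avoided uniformly. *)
Lemma all_levels_avoidable k : levels_avoidable k.
Proof.
  induction k as [|k IH]; intros a b Ha Hab Hb.
  - exists 1; split; [lra|]; intros E; exists a; split; [lra|]; intros j Hj; lia.
  - destruct (uniform_avoidance_band a b Hab ltac:(lra) ltac:(lra)) as [l [Hl [e [He Hband]]]].
    destruct (levels_avoidable_uniform k IH l Hl) as [eps' [Heps' Hu]].
    exists (Rmin e eps'); split; [apply Rmin_pos; auto|]; intros E.
    destruct (Hband (E k)) as [a' [Ha' [Hb' Hfree]]].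
    destruct (Hu a' ltac:(lra) ltac:(lra) E) as [y [Hy Hj]].
    exists y; split; [lra|]; intros j Hjk x Hx.
    destruct (Nat.eq_dec j k) as [->|Hne].
    + apply Rle_trans with e; [apply Rmin_l | apply Hfree; auto].
    + apply Rle_trans with eps'; [apply Rmin_r | apply Hj; auto; lia].
Qed.

End Levels.

Theorem mainTheorem2 (rho : R) (v : C -> C) :
  0 < rho ->
  analytic_on_strip rho v ->
  bounded_on_strip rho v ->
  one_periodic_on_strip rho v ->
  nonconstant_on_strip rho v ->
  forall delta : R, 0 < delta < rho ->
  forall k : nat,
  exists eps : R, 0 < eps /\
    forall E : nat -> R,
      exists y : R, delta / 2 <= y <= delta /\
        forall j : nat, (j < k)%nat ->
          exists m : R, m > eps /\
            forall x : R, 0 <= x <= 1 ->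
              m <= Cmod (Cminus (v (x, y)) (RtoC (E j))).
Proof.
  intros _ Han [M HM] _ Hnc delta Hdelta k.
  destruct (all_levels_avoidable rho v Han M HM Hnc delta Hdelta k (delta / 2) delta)
    as [eps [Heps H]]; try lra.
  exists (eps / 2); split; [lra|]; intros E.
  destruct (H E) as [y [Hy Hj]]; exists y; split; auto.
  intros j Hjk; exists eps; split; [lra|]; intros x Hx; apply Hj; auto.
Qed.
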